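(* Let $\mathcal K$ be a tame topological Kuranishi atlas and write $\mathrm{Obj}:=\bigsqcup_{I\in\mathcal I_{\mathcal K}}U_I$. For $\mathcal A\subset\mathrm{Obj}$ denote by $\|\mathcal A\|$ the set $\pi_{\mathcal K}(\mathcal A)$ with the subspace topology from $|\mathcal K|$, and by $|\mathcal A|$ the same set with the quotient topology induced by $\pi_{\mathcal K}|_{\mathcal A}:\mathcal A\to\pi_{\mathcal K}(\mathcal A)$ (i.e. $\mathcal A$ modulo the restriction of the equivalence relation $\sim$ on $\mathrm{Obj}$). Then: (i) for every $\mathcal A\subset\mathrm{Obj}$ the identity $|\mathcal A|\to\|\mathcal A\|$ is continuous; (ii) if $\mathcal A\sqsubset\mathrm{Obj}$ (i.e. its closure $\overline{\mathcal A}$ in $\mathrm{Obj}$ is compact), then $|\overline{\mathcal A}|$ and $\|\overline{\mathcal A}\|$ are compact and their topologies coincide; (iii) if $\mathcal A\sqsubset\mathcal A'\subset\mathrm{Obj}$, then $\pi_{\mathcal K}(\overline{\mathcal A})=\overline{\pi_{\mathcal K}(\mathcal A)}$ (closure in $|\mathcal K|$) and $\pi_{\mathcal K}(\mathcal A)\sqsubset\pi_{\mathcal K}(\mathcal A')$ in $|\mathcal K|$; (iv) if $\mathcal A\sqsubset\mathrm{Obj}$, then $\|\overline{\mathcal A}\|=|\overline{\mathcal A}|$ is metrizable; in particular $\|\mathcal A\|$ is metrizable.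
   Context: Notation: for subsets $V'\subset V$ of a topological space, $V'\sqsubset V$ means the closure of $V'$ in $V$ is compact. $X$ is a compact metrizable space. Charts: a topological Kuranishi chart for $X$ with open footprint $F\subset X$ is a tuple $\mathbf K=(U,\mathbb E,\mathfrak s,\psi)$ where $U$ is a separable, locally compact, metrizable space; $\mathbb E$ is a separable, locally compact, metrizable space with continuous maps $\mathrm{pr}:\mathbb E\to U$ and $0:U\to\mathbb E$ with $\mathrm{pr}\circ0=\mathrm{id}_U$; $\mathfrak s:U\to\mathbb E$ is continuous with $\mathrm{pr}\circ\mathfrak s=\mathrm{id}_U$; and $\psi$ is a homeomorphism from $\mathfrak s^{-1}(0):=\{x\in U:\mathfrak s(x)=0(x)\}$ onto $F$. Coordinate changes: for charts $\mathbf K_I,\mathbf K_J$ with $F_I\cap F_J\neq\emptyset$, a coordinate change $\widehat\Phi_{IJ}:\mathbf K_I\to\mathbf K_J$ consists of an open set $U_{IJ}\subset U_I$ with $U_{IJ}\cap\mathfrak s_I^{-1}(0_I)=\psi_I^{-1}(F_I\cap F_J)$ and a topological embedding $\widehat\Phi_{IJ}:\mathrm{pr}_I^{-1}(U_{IJ})\to\mathbb E_J$ such that there is a topological embedding $\phi_{IJ}:U_{IJ}\to U_J$ with $\mathrm{pr}_J\circ\widehat\Phi_{IJ}=\phi_{IJ}\circ\mathrm{pr}_I$, $0_J\circ\phi_{IJ}=\widehat\Phi_{IJ}\circ0_I$ and $\mathfrak s_J\circ\phi_{IJ}=\widehat\Phi_{IJ}\circ\mathfrak s_I$ on $U_{IJ}$,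 and $\phi_{IJ}=\psi_J^{-1}\circ\psi_I$ on $U_{IJ}\cap\mathfrak s_I^{-1}(0_I)$. Atlases: a covering family of basic charts is a finite family $(\mathbf K_i)_{i=1,\dots,N}$ of charts whose footprints cover $X$; $\mathcal I_{\mathcal K}$ is the set of nonempty $I\subset\{1,\dots,N\}$ with $F_I:=\bigcap_{i\in I}F_i\neq\emptyset$. Transition data consist of a chart $\mathbf K_J$ with footprint $F_J$ for each $J\in\mathcal I_{\mathcal K}$ with $|J|\ge2$ (and $\mathbf K_{\{i\}}:=\mathbf K_i$), and a coordinate change $\widehat\Phi_{IJ}:\mathbf K_I\to\mathbf K_J$ for all $I\subsetneq J$ in $\mathcal I_{\mathcal K}$. We set $U_{II}:=U_I$, $\phi_{II}:=\mathrm{id}_{U_I}$. For $I\subsetneq J\subsetneq K$ let $U_{IJK}:=U_{IJ}\cap\phi_{IJ}^{-1}(U_{JK})$. The triple satisfies the weak cocycle condition if $\widehat\Phi_{JK}\circ\widehat\Phi_{IJ}=\widehat\Phi_{IK}$ on $\mathrm{pr}_I^{-1}(U_{IJK}\cap U_{IK})$; the cocycle condition if in addition $U_{IJK}\subset U_{IK}$; the strong cocycle condition if in addition $U_{IJK}=U_{IK}$. A weak topological Kuranishi atlas $\mathcal K$ is a covering family with transition data satisfying the weak cocycle condition for all such triples; a topological Kuranishi atlas is one satisfying the cocycle condition for all triples. Filtrations: a weak topological Kuranishi atlas is filtered if it is equipped with closed subsets $\mathbb E_{IJ}\subset\mathbb E_J$ for all $J\in\mathcal I_{\mathcal K}$ and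 $I\subset J$ (including $I=\emptyset$) such that (i) $\mathbb E_{JJ}=\mathbb E_J$ and $\mathbb E_{\emptyset J}=\mathrm{im}\,0_J$; (ii) $\widehat\Phi_{JK}(\mathrm{pr}_J^{-1}(U_{JK})\cap\mathbb E_{IJ})=\mathbb E_{IK}\cap\mathrm{pr}_K^{-1}(\mathrm{im}\,\phi_{JK})$ for $I\subset J\subsetneq K$; (iii) $\mathbb E_{IJ}\cap\mathbb E_{HJ}=\mathbb E_{(I\cap H)J}$ for $I,H\subset J$; (iv) $\mathrm{im}\,\phi_{IJ}$ is an open subset of $\mathfrak s_J^{-1}(\mathbb E_{IJ})$ for $I\subsetneq J$. Tameness: a filtered weak topological Kuranishi atlas is tame if $U_{IJ}\cap U_{IK}=U_{I(J\cup K)}$ for all $I,J,K\in\mathcal I_{\mathcal K}$ with $I\subset J,K$ (where $U_{IL}:=\emptyset$ if $L\notin\mathcal I_{\mathcal K}$), and $\phi_{IJ}(U_{IK})=U_{JK}\cap\mathfrak s_J^{-1}(\mathbb E_{IJ})$ for all $I\subset J\subset K$ in $\mathcal I_{\mathcal K}$ (equalities of indices allowed). Virtual neighbourhood: for a topological Kuranishi atlas, $|\mathcal K|$ is the quotient of $\bigsqcup_{I\in\mathcal I_{\mathcal K}}U_I=\{(I,x):x\in U_I\}$ by the equivalence relation generated by $(I,x)\sim(J,\phi_{IJ}(x))$ for $I\subset J$, $x\in U_{IJ}$, with the quotient topology and projection $\pi_{\mathcal K}$. *)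

From mathcomp Require Import all_boot.
From Stdlib Require Import Reals Relations.

Unset Printing Implicit Defensive.

Definition topology (T : Type) := (T -> Prop) -> Prop.

Definition is_topology {T : Type} (op : topology T) : Prop :=
  op (fun _ => True) /\
  (forall A B, op A -> op B -> op (fun x => A x /\ B x)) /\
  (forall F : (T -> Prop) -> Prop, (forall A, F A -> op A) ->
      op (fun x => exists A, F A /\ A x)).

Definition tclosed {T : Type} (op : topology T) (C : T -> Prop) : Prop :=
  op (fun x => ~ C x).

Definition tclosure {T : Type} (op : topology T) (A : T -> Prop) : T -> Prop :=
  fun x => forall C, tclosed op C -> (forall y, A y -> C y) -> C x.

Definition subspace {T : Type} (op : topology T) (S : T -> Prop)
  : topology {x : T | S x} :=
  fun V => exists W, op W /\ forall y : {x : T | S x}, V y <-> W (proj1_sig y).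

Definition compact_space {T : Type} (op : topology T) : Prop :=
  forall F : (T -> Prop) -> Prop,
    (forall A, F A -> op A) -> (forall x, exists A, F A /\ A x) ->
    exists (n : nat) (f : nat -> (T -> Prop)),
      (forall k, (k < n)%N -> F (f k)) /\
      (forall x, exists k, (k < n)%N /\ f k x).

(* V' ⊏ V (for V' ⊂ V ⊂ T, V with the subspace topology):
   the tclosure of V' in V is compact *)
Definition relcomp_in {T : Type} (op : topology T) (V' V : T -> Prop) : Prop :=
  compact_space
    (subspace (subspace op V)
       (tclosure (subspace op V) (fun y : {x : T | V x} => V' (proj1_sig y)))).

Definition relcomp {T : Type} (op : topology T) (A : T -> Prop) : Prop :=
  compact_space (subspace op (tclosure op A)).

Definition continuous {A B : Type} (opA : topology A) (opB : topology B)
  (f : A -> B) : Prop :=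
  forall W, opB W -> opA (fun x => W (f x)).

Definition embedding {A B : Type} (opA : topology A) (opB : topology B)
  (f : A -> B) : Prop :=
  (forall x y, f x = f y -> x = y) /\ continuous opA opB f /\
  (forall V, opA V -> exists W, opB W /\ forall x, V x <-> W (f x)).

Definition is_metric {T : Type} (d : T -> T -> R) : Prop :=
  (forall x y, (0 <= d x y)%R) /\
  (forall x y, d x y = 0%R <-> x = y) /\
  (forall x y, d x y = d y x) /\
  (forall x y z, (d x z <= d x y + d y z)%R).

Definition metrizable {T : Type} (op : topology T) : Prop :=
  exists d : T -> T -> R, is_metric d /\
    forall V, op V <-> (forall x, V x -> exists eps, (0 < eps)%R /\
                          forall y, (d x y < eps)%R -> V y).

Definition countable_set {T : Type} (D : T -> Prop) : Prop :=
  exists g : T -> nat, forall x y, D x -> D y -> g x = g y -> x = y.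

Definition separable {T : Type} (op : topology T) : Prop :=
  exists D : T -> Prop, countable_set D /\ forall x, tclosure op D x.

Definition locally_compact {T : Type} (op : topology T) : Prop :=
  forall x, exists V Kc : T -> Prop, op V /\ V x /\ (forall y, V y -> Kc y) /\
    compact_space (subspace op Kc).

Definition qtype {T : Type} (Rl : T -> T -> Prop) : Type :=
  {P : T -> Prop | exists a, forall b, P b <-> Rl a b}.

Definition qproj {T : Type} (Rl : T -> T -> Prop) (a : T) : qtype Rl :=
  exist _ (Rl a) (ex_intro _ a (fun b => iff_refl (Rl a b))).

Definition quotient_top {T : Type} (op : topology T) (Rl : T -> T -> Prop)
  : topology (qtype Rl) :=
  fun W => op (fun a => W (qproj Rl a)).

Record chart (X : Type) := Chart {
  cU : Type;
  topU : topology cU;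
  cE : Type;
  topE : topology cE;
  pr : cE -> cU;
  zero : cU -> cE;
  sec : cU -> cE;
  foot : X -> Prop;
  psi : {x : cU | sec x = zero x} -> X
}.

Arguments cU {X}. Arguments topU {X}. Arguments cE {X}. Arguments topE {X}.
Arguments pr {X}. Arguments zero {X}. Arguments sec {X}. Arguments foot {X}.
Arguments psi {X}.

Definition zero_set {X : Type} (K : chart X) : cU K -> Prop :=
  fun x => sec K x = zero K x.

Definition is_chart {X : Type} (opX : topology X) (K : chart X) : Prop :=
  is_topology (topU K) /\ is_topology (topE K) /\
  separable (topU K) /\ locally_compact (topU K) /\ metrizable (topU K) /\
  separable (topE K) /\ locally_compact (topE K) /\ metrizable (topE K) /\
  continuous (topE K) (topU K) (pr K) /\
  continuous (topU K) (topE K) (zero K) /\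
  continuous (topU K) (topE K) (sec K) /\
  (forall x, pr K (zero K x) = x) /\
  (forall x, pr K (sec K x) = x) /\
  opX (foot K) /\
  embedding (subspace (topU K) (zero_set K)) opX (psi K) /\
  (forall y, foot K y <-> exists z, psi K z = y).

(* coordinate change K_I -> K_J given by U_IJ, Phi_IJ, phi_IJ.
   Phi and phi are total functions; only their restrictions to
   pr^{-1}(U_IJ), resp. U_IJ, matter. *)
Definition coord_change {X : Type} {KI KJ : chart X} (U : cU KI -> Prop)
  (Phi : cE KI -> cE KJ) (phi : cU KI -> cU KJ) : Prop :=
  topU KI U /\
  (forall x (h : sec KI x = zero KI x),
     U x <-> (foot KI (psi KI (exist _ x h)) /\ foot KJ (psi KI (exist _ x h)))) /\
  embedding (subspace (topE KI) (fun e => U (pr KI e))) (topE KJ)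
            (fun e => Phi (proj1_sig e)) /\
  embedding (subspace (topU KI) U) (topU KJ) (fun x => phi (proj1_sig x)) /\
  (forall e, U (pr KI e) -> pr KJ (Phi e) = phi (pr KI e)) /\
  (forall x, U x -> zero KJ (phi x) = Phi (zero KI x)) /\
  (forall x, U x -> sec KJ (phi x) = Phi (sec KI x)) /\
  (forall x (h : sec KI x = zero KI x), U x ->
     exists h' : sec KJ (phi x) = zero KJ (phi x),
       psi KJ (exist _ (phi x) h') = psi KI (exist _ x h)).

Record atlas (X : Type) := Atlas {
  aN : nat;
  aK : {set 'I_aN} -> chart X;
  aUIJ : forall I J : {set 'I_aN}, cU (aK I) -> Prop;
  aphi : forall I J : {set 'I_aN}, cU (aK I) -> cU (aK J);
  aPhi : forall I J : {set 'I_aN}, cE (aK I) -> cE (aK J);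
  (* filtration E_IJ ⊂ E_J *)
  aE : forall I J : {set 'I_aN}, cE (aK J) -> Prop
}.

Arguments aN {X}. Arguments aK {X}. Arguments aUIJ {X}. Arguments aphi {X}.
Arguments aPhi {X}. Arguments aE {X}.

Definition inIK {X : Type} (K : atlas X) (I : {set 'I_(aN K)}) : Prop :=
  I != set0 /\ exists x, forall i, i \in I -> foot (aK K [set i]) x.

Definition is_top_atlas {X : Type} (opX : topology X) (K : atlas X) : Prop :=
  (forall x, exists i, foot (aK K [set i]) x) /\
  (forall I : {set 'I_(aN K)}, inIK K I -> is_chart opX (aK K I)) /\
  (forall J : {set 'I_(aN K)}, inIK K J -> forall x,
      foot (aK K J) x <-> (forall i, i \in J -> foot (aK K [set i]) x)) /\
  (forall I J : {set 'I_(aN K)}, inIK K I -> inIK K J -> I \proper J ->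
      coord_change (aUIJ K I J) (aPhi K I J) (aphi K I J)) /\
  (forall I : {set 'I_(aN K)}, inIK K I -> forall x, aUIJ K I I x /\ aphi K I I x = x) /\
  (forall I J L : {set 'I_(aN K)}, inIK K I -> inIK K J -> inIK K L ->
      I \proper J -> J \proper L ->
      (forall e, (aUIJ K I J (pr _ e) /\ aUIJ K J L (aphi K I J (pr _ e))) /\
                 aUIJ K I L (pr _ e) ->
                 aPhi K J L (aPhi K I J e) = aPhi K I L e) /\
      (forall x, aUIJ K I J x /\ aUIJ K J L (aphi K I J x) -> aUIJ K I L x)).

Definition is_filtered {X : Type} (K : atlas X) : Prop :=
  (forall I J : {set 'I_(aN K)}, inIK K J -> I \subset J -> tclosed (topE (aK K J)) (aE K I J)) /\
  (forall J : {set 'I_(aN K)}, inIK K J ->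
      (forall e, aE K J J e) /\
      (forall e, aE K set0 J e <-> exists x, e = zero (aK K J) x)) /\
  (forall I J L : {set 'I_(aN K)}, inIK K J -> inIK K L -> I \subset J -> J \proper L ->
      forall e' : cE (aK K L),
        (exists e, aUIJ K J L (pr _ e) /\ aE K I J e /\ aPhi K J L e = e') <->
        (aE K I L e' /\ exists y, aUIJ K J L y /\ aphi K J L y = pr _ e')) /\
  (forall I H J : {set 'I_(aN K)}, inIK K J -> I \subset J -> H \subset J ->
      forall e, (aE K I J e /\ aE K H J e) <-> aE K (I :&: H) J e) /\
  (* (iv) im phi_IJ is an open subset of s_J^{-1}(E_IJ) *)
  (forall I J : {set 'I_(aN K)}, inIK K I -> inIK K J -> I \proper J ->
      (forall x, aUIJ K I J x -> aE K I J (sec _ (aphi K I J x))) /\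
      subspace (topU (aK K J)) (fun y => aE K I J (sec _ y))
        (fun y => exists x, aUIJ K I J x /\ aphi K I J x = proj1_sig y)).

Definition is_tame {X : Type} (K : atlas X) : Prop :=
  (forall I J L : {set 'I_(aN K)}, inIK K I -> inIK K J -> inIK K L -> I \subset J -> I \subset L ->
      forall x, (aUIJ K I J x /\ aUIJ K I L x) <->
                (inIK K (J :|: L) /\ aUIJ K I (J :|: L) x)) /\
  (forall I J L : {set 'I_(aN K)}, inIK K I -> inIK K J -> inIK K L -> I \subset J -> J \subset L ->
      forall y, (exists x, aUIJ K I J x /\ aUIJ K I L x /\ aphi K I J x = y) <->
                (aUIJ K J L y /\ aE K I J (sec _ y))).

Definition tame_top_atlas {X : Type} (opX : topology X) (K : atlas X) : Prop :=
  is_top_atlas opX K /\ is_filtered K /\ is_tame K.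

Definition IKtype {X : Type} (K : atlas X) := {I : {set 'I_(aN K)} | inIK K I}.

Definition Obj {X : Type} (K : atlas X) : Type :=
  {I : IKtype K & cU (aK K (proj1_sig I))}.

Definition topObj {X : Type} (K : atlas X) : topology (Obj K) :=
  fun V => forall I : IKtype K,
    topU (aK K (proj1_sig I)) (fun x => V (existT _ I x)).

Definition step {X : Type} (K : atlas X) (a b : Obj K) : Prop :=
  proj1_sig (projT1 a) \subset proj1_sig (projT1 b) /\
  aUIJ K (proj1_sig (projT1 a)) (proj1_sig (projT1 b)) (projT2 a) /\
  aphi K (proj1_sig (projT1 a)) (proj1_sig (projT1 b)) (projT2 a) = projT2 b.

Definition simK {X : Type} (K : atlas X) : Obj K -> Obj K -> Prop :=
  clos_refl_sym_trans (Obj K) (step K).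

Definition virt {X : Type} (K : atlas X) : Type := qtype (simK K).

Definition piK {X : Type} (K : atlas X) (a : Obj K) : virt K := qproj (simK K) a.

Definition topVirt {X : Type} (K : atlas X) : topology (virt K) :=
  quotient_top (topObj K) (simK K).

Definition piset {X : Type} {K : atlas X} (A : Obj K -> Prop) : virt K -> Prop :=
  fun p => exists a, A a /\ piK K a = p.

Definition normtop {X : Type} {K : atlas X} (A : Obj K -> Prop)
  : topology {p : virt K | piset A p} :=
  subspace (topVirt K) (piset A).

Definition piA {X : Type} {K : atlas X} (A : Obj K -> Prop)
  (a : {a : Obj K | A a}) : {p : virt K | piset A p} :=
  exist _ (piK K (proj1_sig a)) (ex_intro _ (proj1_sig a) (conj (proj2_sig a) erefl)).

(* |A| : pi_K(A) with the quotient topology induced by pi_K|_A *)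
Definition bartop {X : Type} {K : atlas X} (A : Obj K -> Prop)
  : topology {p : virt K | piset A p} :=
  fun W => subspace (topObj K) A (fun a => W (piA A a)).

(* Tameness makes the generated relation ~ concrete: a ~ b iff a and b have the same image
   in the chart of I_a ∪ I_b.  From this, ~ has closed graph on Obj: if x_n -> x, y_n -> y and
   x_n ~ y_n, then x ~ y.  When I ∩ J is nonempty both sequences come from one sequence in
   U_{I∩J}, whose limit relates x and y; otherwise they lie in the zero sets and one uses that
   X is Hausdorff.  Since Obj is a metric space, the ~-saturation of a compact set is then
   closed, i.e. pi_K maps compact sets to closed sets; this gives (i)-(iii).  For (iv), ||C||
   with C compact is compact, and it is normal because Obj is; Urysohn functions attached to
   pairs of balls of finite nets of C separate its points, and a compact space with a countable
   separating family of continuous functions is metrizable by a weighted sup metric. *)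

From mathcomp Require Import all_boot.
From Stdlib Require Import Reals Relations.
From Stdlib Require Import Lra Classical ClassicalEpsilon FunctionalExtensionality.
From Stdlib Require Import PropExtensionality ProofIrrelevance.
From Stdlib Require Eqdep.
From mathcomp Require Import zify.

Lemma set_ext {T} (V W : T -> Prop) : (forall x, V x <-> W x) -> V = W.
Proof.
by move=> h; apply: functional_extensionality => x; apply: propositional_extensionality.
Qed.

Lemma sig_eq {T} {P : T -> Prop} (x y : {a | P a}) : proj1_sig x = proj1_sig y -> x = y.
Proof. case: x => a ha; case: y => b hb /= e; subst b; by rewrite (proof_irrelevance _ ha hb). Qed.

Lemma topology_ext {T} (op op' : topology T) : (forall W, op W <-> op' W) -> op = op'.
Proof. exact: set_ext. Qed.

Lemma tclosed_compl {T} (op : topology T) V : op V -> tclosed op (fun x => ~ V x).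
Proof.
move=> h; rewrite /tclosed (_ : (fun x => ~ ~ V x) = V) //.
by apply: set_ext => x; split=> [/NNPP|] //; tauto.
Qed.

Lemma subspace_topology {T} {op : topology T} (S : T -> Prop) :
  is_topology op -> is_topology (subspace op S).
Proof.
case=> h1 [h2 h3]; split; [|split].
- by exists (fun _ => True).
- move=> A B [W1 [o1 H1]] [W2 [o2 H2]]; exists (fun x => W1 x /\ W2 x); split; first exact: h2.
  by move=> y; rewrite H1 H2.
- move=> F hF.
  exists (fun x => exists W, (op W /\ exists A, F A /\ forall y, A y <-> W (proj1_sig y)) /\ W x).
  split; first by apply: h3 => W [].
  move=> y; split.
  + move=> [A [FA Ay]]; have [W [oW HW]] := hF A FA.
    by exists W; split; [split=> //; exists A | exact/(HW y)].
  + by move=> [W [[oW [A [FA HA]]] Wy]]; exists A; split=> //; apply/HA.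
Qed.

Lemma quotient_topology {T} {op : topology T} (Rl : T -> T -> Prop) :
  is_topology op -> is_topology (quotient_top op Rl).
Proof.
case=> h1 [h2 h3]; split; [exact: h1 | split; first by move=> A B; exact: h2].
move=> F hF; rewrite /quotient_top.
rewrite (set_ext (fun a => exists A, F A /\ A (qproj Rl a))
           (fun x => exists B, (exists A, F A /\ B = (fun a => A (qproj Rl a))) /\ B x)).
  by apply: h3 => B [A [FA ->]]; exact: hF.
move=> a; split.
- by move=> [A [FA hA]]; exists (fun a => A (qproj Rl a)); split=> //; exists A.
- by move=> [B [[A [FA ->]] hB]]; exists A.
Qed.

Lemma qproj_eq {T} (Rl : T -> T -> Prop) (eqv : equivalence T Rl) a b :
  qproj Rl a = qproj Rl b <-> Rl a b.
Proof.
case: eqv => refl trans sym; split.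
- move=> e; have e' : Rl a = Rl b by have := f_equal (@proj1_sig _ _) e.
  by rewrite e'; apply: refl.
- move=> hab; apply: sig_eq => /=; apply: set_ext => c; split.
  + by move=> hac; apply: (trans _ a) => //; apply: sym.
  + by move=> hbc; apply: (trans _ b).
Qed.

Lemma subspace_closure {T} {op : topology T} {V S} : (forall x, S x -> V x) ->
  forall y : {x | V x},
    tclosure (subspace op V) (fun z => S (proj1_sig z)) y <-> tclosure op S (proj1_sig y).
Proof.
move=> SV y; split.
- move=> h Cl hCl SCl; apply: (h (fun z => Cl (proj1_sig z))).
  + by exists (fun x => ~ Cl x); split=> // z.
  + by move=> z; apply: SCl.
- move=> h0 Cl' [W [hW HW]] SCl'.
  have hcl : tclosed op (fun x => ~ W x) by apply: tclosed_compl.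
  have := h0 _ hcl (fun x Sx Wx => (HW (exist _ x (SV x Sx))).2 Wx (SCl' (exist _ x (SV x Sx)) Sx)).
  by move=> nW; apply: NNPP => nC; apply: nW; apply/(HW y).
Qed.

Definition compact_in {T} (op : topology T) (S : T -> Prop) :=
  forall G : (T -> Prop) -> Prop, (forall W, G W -> op W) ->
    (forall x, S x -> exists W, G W /\ W x) ->
    exists n (f : nat -> T -> Prop), (forall k, (k < n)%N -> G (f k)) /\
      (forall x, S x -> exists k, (k < n)%N /\ f k x).

Lemma compact_inE {T} {op : topology T} {S} : compact_space (subspace op S) <-> compact_in op S.
Proof.
split.
- move=> hc G hG hcov.
  pose trace (W : T -> Prop) (z : {x | S x}) := W (proj1_sig z).
  have [|z|n [f [hf hfc]]] := hc (fun A => exists W, G W /\ A = trace W).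
  + by move=> A [W [GW ->]]; exists W; split; [exact: hG | move=> z; exact: iff_refl].
  + have [W [GW Wz]] := hcov _ (proj2_sig z); by exists (trace W); split=> //; exists W.
  pose P k W := G W /\ f k = trace W.
  pose g k := epsilon (inhabits (fun _ : T => True)) (P k).
  have hg k : (k < n)%N -> P k (g k).
    by move=> kn; have [W HW] := hf k kn; apply: (epsilon_spec _ (P k)); exists W.
  exists n, g; split; first by move=> k /hg [].
  move=> x Sx; have [k [kn fk]] := hfc (exist _ x Sx).
  by exists k; split=> //; have [_ e] := hg k kn; rewrite e in fk.
- move=> hc F hF hcov.
  pose G W := op W /\ exists A, F A /\ forall z, A z <-> W (proj1_sig z).
  have [|x Sx|n [g [hg hgc]]] := hc G.
  + by move=> W [].
  + have [A [FA Az]] := hcov (exist _ x Sx).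
    have [W [oW HW]] := hF A FA.
    by exists W; split; [split=> //; exists A | exact: (HW (exist _ x Sx)).1].
  pose P k A := F A /\ forall z, A z <-> g k (proj1_sig z).
  pose f k := epsilon (inhabits (fun _ : {x | S x} => True)) (P k).
  have hf k : (k < n)%N -> P k (f k).
    by move=> kn; have [_ [A HA]] := hg k kn; apply: (epsilon_spec _ (P k)); exists A.
  exists n, f; split; first by move=> k /hf [].
  move=> z; have [k [kn gk]] := hgc _ (proj2_sig z).
  by exists k; split=> //; apply/(hf k kn).2.
Qed.

Lemma compact_spaceE {T} {op : topology T} : compact_space op <-> compact_in op (fun _ => True).
Proof.
split=> hc G hG hcov.
- have [n [f [h1 h2]]] := hc G hG (fun x => hcov x I).
  by exists n, f; split=> // x _; apply: h2.
- have [n [f [h1 h2]]] := hc G hG (fun x _ => hcov x).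
  by exists n, f; split=> // x; apply: h2.
Qed.

Lemma compact_in_subspace {T} {op : topology T} {S} :
  compact_in op S -> compact_in (subspace op S) (fun _ => True).
Proof. by move/compact_inE/compact_spaceE. Qed.

Lemma compact_in_ext {T} {op : topology T} {S S'} :
  compact_in op S -> (forall x, S x <-> S' x) -> compact_in op S'.
Proof. by move=> h /set_ext <-. Qed.

Lemma compact_in_closed {T} {op : topology T} {S Cl} : compact_in op S -> tclosed op Cl ->
  compact_in op (fun x => S x /\ Cl x).
Proof.
move=> hc hCl G hG hcov.
case: (classic (exists x, S x /\ Cl x)) => [[x0 hx0]|ne]; last first.
  by exists 0%N, (fun _ _ => True); split=> // x hx; case: ne; exists x.
have [W0 [GW0 _]] := hcov x0 hx0.
have [|x Sx|n [f [hf hfc]]] := hc (fun W => G W \/ W = (fun x => ~ Cl x)).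
- by move=> W [/hG //|->].
- case: (classic (Cl x)) => Clx.
  + by have [W [GW Wx]] := hcov x (conj Sx Clx); exists W; split=> //; left.
  + by exists (fun x => ~ Cl x); split=> //; right.
pose g k := if excluded_middle_informative (G (f k)) then f k else W0.
exists n, g; split.
- by move=> k kn; rewrite /g; case: excluded_middle_informative.
- move=> x [Sx Clx]; have [k [kn fk]] := hfc x Sx.
  exists k; split=> //; rewrite /g; case: excluded_middle_informative => // nG.
  by case: (hf k kn) => // e; rewrite e in fk.
Qed.

Lemma compact_in_image {A B} {opA : topology A} {opB : topology B} {f : A -> B} {SA} :
  compact_in opA SA -> continuous opA opB f ->
  compact_in opB (fun y => exists x, SA x /\ f x = y).
Proof.
move=> hc hf G hG hcov.
have [|x Sx|n [g [hg hgc]]] := hc (fun V => exists W, G W /\ V = (fun x => W (f x))).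
- by move=> V [W [GW ->]]; apply: hf; apply: hG.
- have [W [GW Wfx]] := hcov (f x) (ex_intro _ x (conj Sx erefl)).
  by exists (fun x => W (f x)); split=> //; exists W.
pose P k W := G W /\ g k = (fun x => W (f x)).
pose h k := epsilon (inhabits (fun _ : B => True)) (P k).
have hh k : (k < n)%N -> P k (h k).
  by move=> kn; have [W HW] := hg k kn; apply: (epsilon_spec _ (P k)); exists W.
exists n, h; split; first by move=> k /hh [].
move=> y [x [Sx <-]]; have [k [kn gk]] := hgc x Sx.
by exists k; split=> //; have [_ e] := hh k kn; rewrite e in gk.
Qed.

Lemma compact_in_nested {T} {op : topology T} {V} {S : {x | V x} -> Prop} :
  compact_space (subspace (subspace op V) S) ->
  compact_in op (fun a => exists h : V a, S (exist _ a h)).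
Proof.
move=> /compact_inE hc.
have hval : continuous (subspace op V) op (@proj1_sig _ V).
  by move=> W hW; exists W; split=> // z.
have := compact_in_image hc hval.
move/compact_in_ext; apply=> a; split.
- by move=> [[a' h] [Sz /= <-]]; exists h.
- by move=> [h Sz]; exists (exist _ a h).
Qed.

Lemma finite_intersection_nbhd {T} {op : topology T} (htop : is_topology op)
    (q : T) (m : nat) (P : nat -> T -> Prop) :
  (forall k, (k < m)%N -> exists O, op O /\ O q /\ forall z, O z -> P k z) ->
  exists O, op O /\ O q /\ forall k, (k < m)%N -> forall z, O z -> P k z.
Proof.
case: htop => hT [hI _]; elim: m => [|m IH] h.
  by exists (fun _ => True); split=> //; split=> // k; rewrite ltn0.
have [O [oO [Oq HO]]] := IH (fun k km => h k (ltnW km)).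
have [O' [oO' [O'q HO']]] := h m (ltnSn m).
exists (fun z => O z /\ O' z); split; first exact: hI.
split=> // k; rewrite ltnS leq_eqVlt => /orP [/eqP ->|km] z [z1 z2].
- exact: HO'.
- exact: HO.
Qed.

Lemma finite_min_radius (n : nat) (P : nat -> R -> Prop) :
  (forall k r r', (0 < r')%R -> (r' <= r)%R -> P k r -> P k r') ->
  (forall k, (k < n)%N -> exists r, (0 < r)%R /\ P k r) ->
  exists rho, (0 < rho)%R /\ forall k, (k < n)%N -> P k rho.
Proof.
move=> mono; elim: n => [|n IH] h.
  by exists 1%R; split=> [|k]; [lra | rewrite ltn0].
have [rho [r0 Hr]] := IH (fun k kn => h k (ltnW kn)).
have [r [r1 Pr]] := h n (ltnSn n).
exists (Rmin rho r); split; first by apply: Rmin_glb_lt.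
move=> k; rewrite ltnS leq_eqVlt; case/orP => [/eqP ->|kn].
- apply: (mono n r); [by apply: Rmin_glb_lt | exact: Rmin_r | done].
- apply: (mono k rho); [by apply: Rmin_glb_lt | exact: Rmin_l | exact: Hr].
Qed.

Definition converges {T} (op : topology T) (xs : nat -> T) (x : T) :=
  forall V, op V -> V x -> exists N, forall n, (N <= n)%N -> V (xs n).

Lemma converges_continuous {A B} {opA : topology A} {opB : topology B} {f xs x} :
  continuous opA opB f -> converges opA xs x -> converges opB (fun n => f (xs n)) (f x).
Proof. by move=> hf hc V hV Vx; apply: (hc _ (hf V hV)). Qed.

Lemma converges_closed {T} {op : topology T} {C xs x} :
  tclosed op C -> converges op xs x -> (forall n, C (xs n)) -> C x.
Proof.
move=> hC hc hn; apply: NNPP => nC.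
have [N HN] := hc _ hC nC; exact: (HN N (leqnn N) (hn N)).
Qed.

Lemma converges_subspace {T} {op : topology T} {S} {zs : nat -> {x | S x}} {z} :
  converges op (fun n => proj1_sig (zs n)) (proj1_sig z) -> converges (subspace op S) zs z.
Proof.
move=> hc V [W [hW HW]] Vz.
have [N HN] := hc W hW ((HW z).1 Vz).
by exists N => n /HN /(HW (zs n)).2.
Qed.

Lemma converges_embedding {T B} {op : topology T} {opB : topology B} {S} {f : T -> B}
    {zs : nat -> {x | S x}} {z : {x | S x}} :
  embedding (subspace op S) opB (fun y => f (proj1_sig y)) ->
  converges opB (fun n => f (proj1_sig (zs n))) (f (proj1_sig z)) ->
  converges op (fun n => proj1_sig (zs n)) (proj1_sig z).
Proof.
move=> [_ [_ he]] hc V hV Vz.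
have [|W [hW HW]] := he (fun y : {x | S x} => V (proj1_sig y)); first by exists V; split=> // y.
have [N HN] := hc W hW ((HW z).1 Vz).
by exists N => n /HN /(HW (zs n)).2.
Qed.

Definition metric_open {T} (d : T -> T -> R) (V : T -> Prop) :=
  forall x, V x -> exists eps, (0 < eps)%R /\ forall y, (d x y < eps)%R -> V y.

Definition metric_of {T} (op : topology T) : T -> T -> R :=
  match excluded_middle_informative (metrizable op) with
  | left h => proj1_sig (constructive_indefinite_description _ h)
  | right _ => fun _ _ => 0%R
  end.

Lemma metric_ofP {T} {op : topology T} : metrizable op ->
  is_metric (metric_of op) /\ forall V, op V <-> metric_open (metric_of op) V.
Proof.
move=> h; rewrite /metric_of; case: excluded_middle_informative => // h'.
by case: (constructive_indefinite_description _ h').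
Qed.

Lemma metric_open_topology {T} (d : T -> T -> R) : is_topology (metric_open d).
Proof.
split; [|split].
- by move=> x _; exists 1%R; split=> //; lra.
- move=> A B hA hB x [Ax Bx].
  have [e1 [e10 H1]] := hA x Ax; have [e2 [e20 H2]] := hB x Bx.
  exists (Rmin e1 e2); split; first by apply: Rmin_glb_lt.
  move=> y hy; split; [apply: H1 | apply: H2]; [have := Rmin_l e1 e2 | have := Rmin_r e1 e2]; lra.
- move=> F hF x [A [FA Ax]].
  have [e [e0 He]] := hF A FA x Ax.
  by exists e; split=> // y hy; exists A; split=> //; apply: He.
Qed.

Section MetricSpace.
Context {T : Type} {d : T -> T -> R} (hd : is_metric d).

Lemma metric_ge0 x y : (0 <= d x y)%R. Proof. by case: hd. Qed.
Lemma metric_xx x : d x x = 0%R. Proof. by case: hd => _ [h _]; apply: (proj2 (h x x)). Qed.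
Lemma metric_sym x y : d x y = d y x. Proof. by case: hd => _ [_ [h _]]. Qed.
Lemma metric_triangle x y z : (d x z <= d x y + d y z)%R. Proof. by case: hd => _ [_ [_ h]]. Qed.

Lemma metric_gt0 {x y} : x <> y -> (0 < d x y)%R.
Proof.
move=> nxy; case: (Rle_lt_or_eq_dec _ _ (metric_ge0 x y)) => // /esym e.
by case: hd => _ [h _]; case: nxy; apply/h.
Qed.

Lemma metric_open_ball x r : metric_open d (fun y => (d x y < r)%R).
Proof.
move=> y hy; exists (r - d x y)%R; split; first lra.
move=> z hz; have := metric_triangle x y z; lra.
Qed.

Lemma metric_open_ball_compl x r : metric_open d (fun y => ~ (d x y <= r)%R).
Proof.
move=> y hy; exists (d x y - r)%R; split; first lra.
move=> z hz hle; have := metric_triangle x z y; have := metric_sym y z; lra.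
Qed.

Context {op : topology T} (hop : forall V, op V <-> metric_open d V).

Lemma open_ball x r : op (fun y => (d x y < r)%R).
Proof. exact/hop/metric_open_ball. Qed.

Lemma closed_ball x r : tclosed op (fun y => (d x y <= r)%R).
Proof. exact/hop/metric_open_ball_compl. Qed.

Lemma converges_ball {xs x} : (forall n, (d x (xs n) < / INR n.+1)%R) -> converges op xs x.
Proof.
move=> hn V /hop hV Vx.
have [e [e0 He]] := hV x Vx.
have [N [HN N0]] := archimed_cor1 e e0.
exists N => n hn'; apply: He.
apply: (Rlt_le_trans _ _ _ (hn n)); apply: Rle_trans (Rlt_le _ _ HN).
apply: Rinv_le_contravar; first by apply: lt_0_INR.
apply: le_INR; apply/leP; exact: (leq_trans hn' (leqnSn n)).
Qed.

Lemma converges_unique {xs x y} : converges op xs x -> converges op xs y -> x = y.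
Proof.
move=> hx hy; apply: NNPP => /metric_gt0 r0.
have [N1 H1] := hx _ (open_ball x (d x y / 2)) (ltac:(rewrite /= metric_xx; lra)).
have [N2 H2] := hy _ (open_ball y (d x y / 2)) (ltac:(rewrite /= metric_xx; lra)).
have /= h1 := H1 (maxn N1 N2) (leq_maxl _ _).
have /= h2 := H2 (maxn N1 N2) (leq_maxr _ _).
have := metric_triangle x (xs (maxn N1 N2)) y; have := metric_sym (xs (maxn N1 N2)) y; lra.
Qed.

(* Cover [S] by balls around points [c] whose [Rel]-image stays away from a ball around [b];
   finitely many suffice, and the smallest of their radii works around [b]. *)
Lemma saturation_compl_open (Rel : T -> T -> Prop) (S : T -> Prop) :
  compact_in op S ->
  (forall c b, S c -> ~ Rel c b -> exists r, (0 < r)%R /\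
      forall c' b', (d c c' < r)%R -> (d b b' < r)%R -> ~ Rel c' b') ->
  op (fun b => ~ exists c, S c /\ Rel c b).
Proof.
move=> hc hsep; apply/hop => b hb.
pose G W := exists c r, S c /\ (0 < r)%R /\
   (forall c' b', (d c c' < r)%R -> (d b b' < r)%R -> ~ Rel c' b') /\ W = (fun z => (d c z < r)%R).
have [|c Sc|n [f [hf hfc]]] := hc G.
- by move=> W [c [r [_ [_ [_ ->]]]]]; apply: open_ball.
- have [r [r0 Hr]] := hsep c b Sc (fun h => hb (ex_intro _ c (conj Sc h))).
  exists (fun z => (d c z < r)%R); split; first by exists c, r.
  by rewrite metric_xx.
pose P k rho := forall c' b', f k c' -> (d b b' < rho)%R -> ~ Rel c' b'.
have [|k kn|rho [rho0 Hrho]] := finite_min_radius n P.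
- move=> k r r' _ le h c' b' fc db; apply: (h c' b' fc); lra.
- have [c [r [_ [r0 [Hr e]]]]] := hf k kn.
  exists r; split=> // c' b'; rewrite e => /= dc db; exact: Hr.
exists rho; split=> // b' db [c [Sc Rcb]].
have [k [kn fk]] := hfc c Sc.
exact: (Hrho k kn c b' fk db Rcb).
Qed.

Lemma compact_tclosed S : compact_in op S -> tclosed op S.
Proof.
move=> hc; rewrite /tclosed.
rewrite (set_ext (fun b => ~ S b) (fun b => ~ exists c, S c /\ c = b)); last first.
  by move=> b; split=> h1 h2; apply: h1; [case: h2 => c [Sc <-] | exists b].
apply: (saturation_compl_open eq S hc) => c b _ ncb.
have d0 := metric_gt0 ncb.
exists (d c b / 2)%R; split; first lra.
move=> c' b' h1 h2 e; subst b'.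
have := metric_triangle c c' b; have := metric_sym b c'; lra.
Qed.

Lemma compact_in_open_shrink S V : compact_in op S -> op V -> (forall x, S x -> V x) ->
  exists N Ncl, op N /\ tclosed op Ncl /\
    (forall x, S x -> N x) /\ (forall x, N x -> Ncl x) /\ (forall x, Ncl x -> V x).
Proof.
move=> hc oV SV; case: (classic (exists a, S a)) => [[a0 Sa0]|nS]; last first.
  exists (fun _ => False), (fun _ => False); split; first by apply/hop.
  split; first by apply/hop => x _; exists 1%R; split=> [|y _ []]; lra.
  by split=> // x Sx; case: nS; exists x.
pose Gd (ar : T * R) W := S ar.1 /\ (0 < ar.2)%R /\
   (forall x, (d ar.1 x < 2 * ar.2)%R -> V x) /\ W = (fun x => (d ar.1 x < ar.2)%R).
have [|a Sa|n [f [hf hfc]]] := hc (fun W => exists ar, Gd ar W).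
- by move=> W [ar [_ [_ [_ ->]]]]; apply: open_ball.
- have [e [e0 He]] := (hop _).1 oV a (SV a Sa).
  exists (fun x => (d a x < e / 2)%R); split; last by rewrite /= metric_xx; lra.
  exists (a, e / 2)%R; split=> //; split=> /=; first lra; split=> // x hx; apply: He; lra.
pose ck k := epsilon (inhabits (a0, 1%R)) (fun ar => Gd ar (f k)).
have hck k : (k < n)%N -> Gd (ck k) (f k).
  move=> kn; have [ar har] := hf k kn.
  by apply: (epsilon_spec _ (fun ar => Gd ar (f k))); exists ar.
exists (fun x => exists k, (k < n)%N /\ f k x).
exists (fun x => exists k, (k < n)%N /\ (d (ck k).1 x <= (ck k).2)%R).
split; [|split; [|split; [|split]]].
- apply/hop => x [k [kn fx]].
  have [_ [_ [_ e]]] := hck k kn; rewrite e /= in fx.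
  exists ((ck k).2 - d (ck k).1 x)%R; split; first lra.
  move=> y hy; exists k; split=> //; rewrite e /=.
  have := metric_triangle (ck k).1 x y; lra.
- apply/hop => x nx.
  have hx k : (k < n)%N -> ((ck k).2 < d (ck k).1 x)%R.
    by move=> kn; apply: Rnot_le_lt => h; apply: nx; exists k.
  pose P k ep := forall y, (d x y < ep)%R -> ~ (d (ck k).1 y <= (ck k).2)%R.
  have [|k kn|ep [ep0 Hep]] := finite_min_radius n P.
  + by move=> k r r' _ le h y hy; apply: h; lra.
  + exists (d (ck k).1 x - (ck k).2)%R; split; first by have := hx k kn; lra.
    move=> y hy hle; have := metric_triangle (ck k).1 y x; have := metric_sym x y; lra.
  + exists ep; split=> // y hy [k [kn hk]]; exact: (Hep k kn y hy hk).
- by move=> x Sx; have [k [kn fk]] := hfc x Sx; exists k.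
- move=> x [k [kn fx]]; exists k; split=> //.
  have [_ [_ [_ e]]] := hck k kn; rewrite e /= in fx; lra.
- move=> x [k [kn hk]]; have [_ [r0 [hV _]]] := hck k kn; apply: hV; lra.
Qed.

Lemma compact_in_net S r : compact_in op S -> (0 < r)%R ->
  exists z : nat -> option T, (forall k c, z k = Some c -> S c) /\
    forall c, S c -> exists k c', z k = Some c' /\ (d c' c < r)%R.
Proof.
move=> hc r0; case: (classic (exists a, S a)) => [[a0 Sa0]|nS]; last first.
  by exists (fun _ => None); split=> // c Sc; case: nS; exists c.
pose Gb W := exists c, S c /\ W = (fun x => (d c x < r)%R).
have [|c Sc|m [f [hf hfc]]] := hc Gb.
- by move=> W [c [_ ->]]; apply: open_ball.
- by exists (fun x => (d c x < r)%R); split; [exists c | rewrite /= metric_xx].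
pose P k c := S c /\ f k = (fun x => (d c x < r)%R).
pose z k := epsilon (inhabits a0) (P k).
have hz k : (k < m)%N -> P k (z k).
  by move=> km; have [c hc'] := hf k km; apply: (epsilon_spec _ (P k)); exists c.
exists (fun k => if (k < m)%N then Some (z k) else None); split.
- by move=> k c; case: ifP => // km [<-]; case: (hz k km).
- move=> c Sc; have [k [km fk]] := hfc c Sc.
  by exists k, (z k); rewrite km; split=> //; have [_ e] := hz k km; rewrite e in fk.
Qed.

End MetricSpace.

Definition included {T} (A B : T -> Prop) := forall x, A x -> B x.

Definition normal_space {T} (tau : topology T) := forall F G : T -> Prop,
  tclosed tau F -> tau G -> included F G ->
  exists V F', tau V /\ tclosed tau F' /\ included F V /\ included V F' /\ included F' G.

Lemma pow2_gt0 n : (0 < INR (expn 2 n))%R.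
Proof. apply: lt_0_INR; apply/ltP; exact: expn_gt0. Qed.

Definition dyadic (n k : nat) : R := (INR k / INR (expn 2 n))%R.

Lemma dyadic_ge0 n k : (0 <= dyadic n k)%R.
Proof.
apply: Rmult_le_pos; first exact: pos_INR.
by apply/Rlt_le/Rinv_0_lt_compat/pow2_gt0.
Qed.

Lemma dyadicS n j : dyadic n j.+1 = (dyadic n j + / INR (expn 2 n))%R.
Proof. have p := pow2_gt0 n; rewrite /dyadic S_INR; field; lra. Qed.

Lemma dyadic_le n k k' : (INR k <= INR k' * INR (expn 2 n))%R -> (dyadic n k <= INR k')%R.
Proof.
have p := pow2_gt0 n; move=> h; rewrite /dyadic.
apply: (Rmult_le_reg_r (INR (expn 2 n))) => //; rewrite /Rdiv Rmult_assoc Rinv_l; lra.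
Qed.

Lemma dyadic_le1 n k : k <= expn 2 n -> (dyadic n k <= 1)%R.
Proof. by move=> /leP/le_INR hk; rewrite -[1%R]/(INR 1); apply: dyadic_le; rewrite Rmult_1_l. Qed.

Lemma dyadic_ltn {n a n' c} : (dyadic n a < dyadic n' c)%R -> a * expn 2 n' < c * expn 2 n.
Proof.
rewrite /dyadic => h; apply/ltP; apply: INR_lt; rewrite !mult_INR.
have p := pow2_gt0 n; have p' := pow2_gt0 n'.
have e1 : (INR a * INR (expn 2 n') =
  (INR a / INR (expn 2 n)) * (INR (expn 2 n) * INR (expn 2 n')))%R by field; lra.
have e2 : (INR c * INR (expn 2 n) =
  (INR c / INR (expn 2 n')) * (INR (expn 2 n) * INR (expn 2 n')))%R by field; lra.
rewrite e1 e2; apply: Rmult_lt_compat_r => //; exact: Rmult_lt_0_compat.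
Qed.

Lemma dyadic_floor n {t} : (0 <= t)%R -> exists j, (dyadic n j <= t < dyadic n j.+1)%R.
Proof.
move=> t0; have p := pow2_gt0 n.
have [m hm] := INR_unbounded (t * INR (expn 2 n)).
have [j hj] : exists j, (INR j <= t * INR (expn 2 n) < INR j + 1)%R.
  elim: m hm => [|m IH] hm; first by simpl in hm; nra.
  case: (Rlt_or_le (t * INR (expn 2 n)) (INR m)) => h; first exact: IH.
  by exists m; rewrite S_INR in hm; lra.
exists j; rewrite /dyadic S_INR; split.
- apply: (Rmult_le_reg_r (INR (expn 2 n))) => //; rewrite /Rdiv Rmult_assoc Rinv_l; lra.
- apply: (Rmult_lt_reg_r (INR (expn 2 n))) => //; rewrite /Rdiv Rmult_assoc Rinv_l; lra.
Qed.

Lemma even_or_odd k : (exists j, k = j.*2) \/ (exists j, k = (j.*2).+1).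
Proof.
have := odd_double_half k; case: (odd k) => /= e.
- by right; exists k./2; exact: (esym e).
- by left; exists k./2; exact: (esym e).
Qed.

Section Urysohn.
Context {T : Type} {tau : topology T} (htop : is_topology tau) (hnormal : normal_space tau).
Variables F0 G1 : T -> Prop.
Hypotheses (hF0 : tclosed tau F0) (hG1 : tau G1) (hFG : included F0 G1).

Definition nested_pair (P : (T -> Prop) * (T -> Prop)) :=
  tau P.1 /\ tclosed tau P.2 /\ included P.1 P.2.

Definition between (F G : T -> Prop) (P : (T -> Prop) * (T -> Prop)) :=
  nested_pair P /\ included F P.1 /\ included P.2 G.

Definition interpolate (F G : T -> Prop) :=
  epsilon (inhabits ((fun _ : T => True), (fun _ : T => True))) (between F G).

Lemma interpolateP F G : tclosed tau F -> tau G -> included F G -> between F G (interpolate F G).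
Proof.
move=> hF hG hFG'; apply: epsilon_spec.
have [V [F' [h1 [h2 [h3 [h4 h5]]]]]] := hnormal F G hF hG hFG'.
by exists (V, F').
Qed.

Definition level0 := interpolate F0 G1.
Definition level1 := interpolate level0.2 G1.

Lemma level0P : between F0 G1 level0.
Proof. exact: interpolateP. Qed.

Lemma level1P : between level0.2 G1 level1.
Proof. by have [[_ [h2 _]] [_ h3]] := level0P; apply: interpolateP. Qed.

(* [dyadic_pair n k] = (O, C) is attached to the dyadic number k / 2^n; along increasing
   dyadics O ⊆ C ⊆ O' ⊆ C' ..., starting from F0 ⊆ O_0 and ending with C_1 ⊆ G1. *)
Fixpoint dyadic_pair (n k : nat) : (T -> Prop) * (T -> Prop) :=
  match n with
  | 0 => if k == 0 then level0 else level1
  | n'.+1 =>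
    if odd k then interpolate (dyadic_pair n' k./2).2 (dyadic_pair n' (k./2).+1).1
    else dyadic_pair n' k./2
  end.

Local Notation dp := dyadic_pair.

Lemma dyadic_pair_even n j : dp n.+1 j.*2 = dp n j.
Proof. by rewrite /= odd_double doubleK. Qed.

Lemma dyadic_pair_odd n j : dp n.+1 (j.*2).+1 = interpolate (dp n j).2 (dp n j.+1).1.
Proof. by rewrite /= odd_double /= uphalf_double. Qed.

Lemma dyadic_pair_invariant n : (forall k, k <= expn 2 n -> nested_pair (dp n k)) /\
  (forall k, k < expn 2 n -> included (dp n k).2 (dp n k.+1).1).
Proof.
elim: n => [|n [IH1 IH2]].
- rewrite expn0; split.
  + move=> k; rewrite leq_eqVlt ltnS leqn0; case/orP=> /eqP ->; first by have [] := level1P.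
    by have [] := level0P.
  + by move=> k; rewrite ltnS leqn0 => /eqP -> /=; have [_ []] := level1P.
- have hsp j : j < expn 2 n -> between (dp n j).2 (dp n j.+1).1 (dp n.+1 (j.*2).+1).
    move=> jn; have [_ [h2 _]] := IH1 j (ltnW jn); have [h1 _] := IH1 j.+1 jn.
    rewrite dyadic_pair_odd; exact: (interpolateP _ _ h2 h1 (IH2 j jn)).
  rewrite expnS mul2n; split.
  + move=> k; case: (even_or_odd k) => [[j ->]|[j ->]].
    * by rewrite dyadic_pair_even leq_double => /IH1.
    * move=> hk; have jn : j < expn 2 n by rewrite -ltn_double; apply: leq_ltn_trans hk.
      by have [] := hsp j jn.
  + move=> k; case: (even_or_odd k) => [[j ->]|[j ->]] hk.
    * have jn : j < expn 2 n by rewrite -ltn_double; apply: leq_ltn_trans hk.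
      by rewrite dyadic_pair_even; have [_ []] := hsp j jn.
    * have jn : j < expn 2 n by rewrite -ltn_double; apply: ltn_trans hk.
      rewrite (_ : (j.*2).+2 = (j.+1).*2) // dyadic_pair_even.
      by have [_ []] := hsp j jn.
Qed.

Lemma dyadic_pair_nested {n k} : k <= expn 2 n -> nested_pair (dp n k).
Proof. exact: (dyadic_pair_invariant n).1. Qed.

Lemma dyadic_pair_top n : dp n (expn 2 n) = level1.
Proof. by elim: n => [//|n IH]; rewrite expnS mul2n dyadic_pair_even. Qed.

Lemma dyadic_pair_refine n m k : dp (n + m) (k * expn 2 m) = dp n k.
Proof.
elim: m => [|m IH]; first by rewrite addn0 expn0 muln1.
by rewrite addnS expnS -mulnCA mul2n dyadic_pair_even.
Qed.

Lemma dyadic_pair_mono {n k k'} : k < k' -> k' <= expn 2 n -> included (dp n k).2 (dp n k').1.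
Proof.
move=> kk'; elim: k' kk' => [//|k' IH]; rewrite ltnS leq_eqVlt => /orP [/eqP <-|kk'] hk'.
- exact: (dyadic_pair_invariant n).2.
- move=> x /(IH kk' (ltnW hk')) h.
  have [_ [_ h3]] := dyadic_pair_nested (ltnW hk').
  exact: ((dyadic_pair_invariant n).2 k' hk' x (h3 x h)).
Qed.

Lemma dyadic_pair_lt {n a n' c} : a <= expn 2 n -> c <= expn 2 n' ->
  (dyadic n a < dyadic n' c)%R -> included (dp n a).2 (dp n' c).1.
Proof.
move=> ha hc /dyadic_ltn hlt.
rewrite -(dyadic_pair_refine n n' a) -(dyadic_pair_refine n' n c) (addnC n' n).
by apply: dyadic_pair_mono => //; rewrite expnD mulnC leq_mul2l hc orbT.
Qed.

Lemma dyadic_pair_sub_G1 {n k} : k <= expn 2 n -> included (dp n k).1 G1.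
Proof.
move=> hk x hx.
have [[_ [_ hP1]] [_ hG]] := level1P.
have hc := (dyadic_pair_nested hk).2.2 x hx.
apply: hG; move: hk hc; rewrite leq_eqVlt => /orP [/eqP ->|lk] hc.
- by move: hc; rewrite dyadic_pair_top.
- by apply: hP1; rewrite -(dyadic_pair_top n); apply: (dyadic_pair_mono lk (leqnn _)).
Qed.

Definition levels (y : T) (r : R) :=
  r = 1%R \/ exists n k, k <= expn 2 n /\ (dp n k).1 y /\ r = dyadic n k.

Lemma levels_ge0 y r : levels y r -> (0 <= r)%R.
Proof. case=> [->|[n [k [_ [_ ->]]]]]; [lra | exact: dyadic_ge0]. Qed.

Lemma opp_levels_bound y : bound (fun r => levels y (- r)%R).
Proof. by exists 0%R => r /levels_ge0; lra. Qed.

Lemma opp_levels_inhabited y : exists r, levels y (- r)%R.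
Proof. by exists (-1)%R; left; lra. Qed.

(* The infimum of [levels y], computed as minus the supremum of its opposite. *)
Definition urysohn_fun (y : T) : R :=
  (- proj1_sig (completeness _ (opp_levels_bound y) (opp_levels_inhabited y)))%R.

Local Notation u := urysohn_fun.

Lemma urysohn_fun_le y r : levels y r -> (u y <= r)%R.
Proof.
rewrite /u; case: completeness => m [ub _] /= h.
have := ub (- r)%R (ltac:(by rewrite /= Ropp_involutive)); lra.
Qed.

Lemma urysohn_fun_ge y b : (forall r, levels y r -> (b <= r)%R) -> (b <= u y)%R.
Proof.
rewrite /u; case: completeness => m [_ lub] /= H.
have : (m <= - b)%R by apply: lub => r h; have := H (- r)%R h; lra.
lra.
Qed.

Lemma urysohn_fun_range y : (0 <= u y <= 1)%R.
Proof.
split; [apply: urysohn_fun_ge => r /levels_ge0 // | apply: urysohn_fun_le; by left].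
Qed.

Lemma urysohn_fun_F0 y : F0 y -> u y = 0%R.
Proof.
move=> hy; apply: Rle_antisym; last exact: (urysohn_fun_range y).1.
rewrite (_ : 0%R = dyadic 0 0); last by rewrite /dyadic /= /Rdiv Rmult_0_l.
apply: urysohn_fun_le; right; exists 0, 0; split=> //; split=> //.
by have [_ [h _]] := level0P; apply: h.
Qed.

Lemma urysohn_fun_G1 y : ~ G1 y -> u y = 1%R.
Proof.
move=> hy; apply: Rle_antisym; first exact: (urysohn_fun_range y).2.
apply: urysohn_fun_ge => r [->|[n [k [hk [hO _]]]]]; first lra.
by case: hy; apply: (dyadic_pair_sub_G1 hk).
Qed.

Lemma urysohn_fun_open_le {y n k} : k <= expn 2 n -> (dp n k).1 y -> (u y <= dyadic n k)%R.
Proof. by move=> hk hO; apply: urysohn_fun_le; right; exists n, k. Qed.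

Lemma urysohn_fun_closed_le {y n k} : k < expn 2 n -> (dp n k).2 y -> (u y <= dyadic n k.+1)%R.
Proof.
by move=> hk hC; apply: urysohn_fun_open_le => //; exact: ((dyadic_pair_invariant n).2 k hk y hC).
Qed.

Lemma urysohn_fun_lt {y n k} : k <= expn 2 n -> (u y < dyadic n k)%R -> (dp n k).1 y.
Proof.
move=> hk hlt; apply: NNPP => nO.
suff : (dyadic n k <= u y)%R by lra.
apply: urysohn_fun_ge => r [->|[n' [k' [hk' [hO ->]]]]]; first exact: dyadic_le1.
apply: Rnot_lt_le => hl; apply: nO.
apply: (dyadic_pair_lt hk' hk hl y).
exact: (dyadic_pair_nested hk').2.2.
Qed.

Lemma urysohn_fun_not_closed {y n k} : k <= expn 2 n -> ~ (dp n k).2 y -> (dyadic n k <= u y)%R.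
Proof.
move=> hk nC; apply: urysohn_fun_ge => r [->|[n' [k' [hk' [hO ->]]]]]; first exact: dyadic_le1.
apply: Rnot_lt_le => hl; apply: nC.
apply: (dyadic_pair_nested hk).2.2; apply: (dyadic_pair_lt hk' hk hl).
exact: (dyadic_pair_nested hk').2.2.
Qed.

Lemma urysohn_fun_upper n y : exists O, tau O /\ O y /\
  forall z, O z -> (u z <= u y + / INR (expn 2 n))%R.
Proof.
have [j [dj dj1]] := dyadic_floor n (urysohn_fun_range y).1.
case: (leqP j.+1 (expn 2 n)) => hj.
- exists (dp n j.+1).1; split; first exact: (dyadic_pair_nested hj).1.
  split; first exact: (urysohn_fun_lt hj).
  by move=> z /(urysohn_fun_open_le hj); rewrite dyadicS; lra.
- exists (fun _ => True); split; first by case: htop.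
  split=> // z _; have := (urysohn_fun_range z).2.
  have : (1 <= dyadic n j)%R.
    have p := pow2_gt0 n; have /leP/le_INR : expn 2 n <= j := hj; rewrite /dyadic => h.
    apply: (Rmult_le_reg_r (INR (expn 2 n))) => //; rewrite /Rdiv Rmult_assoc Rinv_l; lra.
  have := Rinv_0_lt_compat _ (pow2_gt0 n); lra.
Qed.

Lemma urysohn_fun_lower n y : exists O, tau O /\ O y /\
  forall z, O z -> (u y - 3 * / INR (expn 2 n) < u z)%R.
Proof.
have hpos := Rinv_0_lt_compat _ (pow2_gt0 n).
have [j [dj dj1]] := dyadic_floor n (urysohn_fun_range y).1.
have dy1 : (dyadic n 1 = / INR (expn 2 n))%R by rewrite dyadicS /dyadic /= /Rdiv Rmult_0_l; lra.
case: j dj dj1 => [|[|i]] dj dj1.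
1,2: exists (fun _ => True); split; first by case: htop.
1,2: by split=> // z _; have := (urysohn_fun_range z).1; rewrite ?(dyadicS n 1) dy1 in dj1; lra.
have hi : i.+2 <= expn 2 n.
  have /INR_le/leP : (INR i.+2 <= INR (expn 2 n))%R.
    have := (urysohn_fun_range y).2; move: dj; rewrite /dyadic => dj.
    have p := pow2_gt0 n.
    have : (INR i.+2 / INR (expn 2 n) * INR (expn 2 n) = INR i.+2)%R by field; lra.
    nra.
  done.
exists (fun z => ~ (dp n i).2 z).
split; first exact: (dyadic_pair_nested (leq_trans (leqnSn _) (ltnW hi))).2.1.
split.
- move=> /(urysohn_fun_closed_le (ltn_trans (ltnSn _) hi)).
  by rewrite (dyadicS n i.+1) in dj; have := hpos; lra.
- move=> z /(urysohn_fun_not_closed (leq_trans (leqnSn _) (ltnW hi))).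
  by rewrite !dyadicS in dj1; lra.
Qed.

Lemma urysohn_fun_continuous y eps : (0 < eps)%R ->
  exists O, tau O /\ O y /\ forall z, O z -> (Rabs (u z - u y) < eps)%R.
Proof.
move=> e0.
have [n [hn n0]] := archimed_cor1 (eps / 4) (ltac:(lra)).
have hM : (/ INR (expn 2 n) < eps / 4)%R.
  apply: Rle_lt_trans hn; apply: Rinv_le_contravar; first by apply: lt_0_INR.
  apply: le_INR; apply/leP; exact: ltnW (ltn_expl n (ltnSn 1)).
have [O1 [oO1 [O1y H1]]] := urysohn_fun_upper n y.
have [O2 [oO2 [O2y H2]]] := urysohn_fun_lower n y.
exists (fun z => O1 z /\ O2 z); split; first by case: htop => _ [hI _]; apply: hI.
split=> // z [z1 z2]; have := H1 z z1; have := H2 z z2 => a b.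
by apply: Rabs_def1; lra.
Qed.

End Urysohn.

Section CompactMetrization.
Context {T : Type} {tau : topology T} (htop : is_topology tau).
Hypothesis hcpt : compact_space tau.
Variable f : nat -> nat -> nat -> T -> R.
Hypothesis f_range : forall n a b y, (0 <= f n a b y <= 1)%R.
Hypothesis f_continuous : forall n a b y eps, (0 < eps)%R ->
   exists O, tau O /\ O y /\ forall z, O z -> (Rabs (f n a b z - f n a b y) < eps)%R.
Hypothesis f_separates : forall p q, p <> q -> exists n a b, f n a b p <> f n a b q.

Definition weight (n a b : nat) : R := (/ (2 ^ (n + a + b)))%R.

Lemma weight_gt0 n a b : (0 < weight n a b)%R.
Proof. apply: Rinv_0_lt_compat; apply: pow_lt; lra. Qed.

Lemma weight_le n a b N : N <= n + a + b -> (weight n a b <= / 2 ^ N)%R.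
Proof.
move=> hN; apply: Rinv_le_contravar; first by apply: pow_lt; lra.
apply: Rle_pow; first lra; exact/leP.
Qed.

Lemma weight_le1 n a b : (weight n a b <= 1)%R.
Proof. by rewrite -Rinv_1 -(pow_O 2); apply: weight_le. Qed.

Definition weighted_gap p q n a b := (weight n a b * Rabs (f n a b p - f n a b q))%R.

Lemma gap_le1 n a b p q : (Rabs (f n a b p - f n a b q) <= 1)%R.
Proof. by apply: Rabs_le; have := f_range n a b p; have := f_range n a b q; lra. Qed.

Lemma weighted_gap_ge0 p q n a b : (0 <= weighted_gap p q n a b)%R.
Proof. by apply: Rmult_le_pos; [exact: Rlt_le (weight_gt0 n a b) | exact: Rabs_pos]. Qed.

Lemma weighted_gap_le1 p q n a b : (weighted_gap p q n a b <= 1)%R.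
Proof.
have := weight_le1 n a b; have := weight_gt0 n a b; have := gap_le1 n a b p q.
have := Rabs_pos (f n a b p - f n a b q); rewrite /weighted_gap; nra.
Qed.

Definition gaps p q r := exists n a b, r = weighted_gap p q n a b.

Lemma gaps_bound p q : bound (gaps p q).
Proof. by exists 1%R => r [n [a [b ->]]]; apply: weighted_gap_le1. Qed.

Lemma gaps_inhabited p q : exists r, gaps p q r.
Proof. by exists (weighted_gap p q 0 0 0), 0, 0, 0. Qed.

Definition sup_metric p q := proj1_sig (completeness _ (gaps_bound p q) (gaps_inhabited p q)).

Lemma sup_metric_ge p q n a b : (weighted_gap p q n a b <= sup_metric p q)%R.
Proof. rewrite /sup_metric; case: completeness => m [ub _] /=; apply: ub; by exists n, a, b. Qed.

Lemma sup_metric_le p q c :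
  (forall n a b, (weighted_gap p q n a b <= c)%R) -> (sup_metric p q <= c)%R.
Proof.
rewrite /sup_metric; case: completeness => m [_ lub] /= H.
by apply: lub => r [n [a [b ->]]]; exact: H.
Qed.

Lemma sup_metric_is_metric : is_metric sup_metric.
Proof.
have ge0 p q : (0 <= sup_metric p q)%R.
  exact: Rle_trans (weighted_gap_ge0 p q 0 0 0) (sup_metric_ge p q 0 0 0).
split; [exact: ge0 | split; [|split]].
- move=> p q; split.
  + move=> h0; apply: NNPP => npq.
    have [n [a [b ne]]] := f_separates _ _ npq.
    have := sup_metric_ge p q n a b; rewrite h0 /weighted_gap => h.
    have : (0 < Rabs (f n a b p - f n a b q))%R by apply: Rabs_pos_lt; move=> e; apply: ne; lra.
    have := weight_gt0 n a b; nra.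
  + move=> ->; apply: Rle_antisym; last exact: ge0.
    by apply: sup_metric_le => n a b; rewrite /weighted_gap Rminus_diag Rabs_R0 Rmult_0_r; lra.
- by move=> p q; apply: Rle_antisym; apply: sup_metric_le => n a b;
    rewrite /weighted_gap Rabs_minus_sym; apply: sup_metric_ge.
- move=> p r q; apply: sup_metric_le => n a b.
  apply: Rle_trans (Rplus_le_compat _ _ _ _ (sup_metric_ge p r n a b) (sup_metric_ge r q n a b)).
  rewrite /weighted_gap -Rmult_plus_distr_l.
  apply: Rmult_le_compat_l; first exact: Rlt_le (weight_gt0 n a b).
  rewrite (_ : (f n a b p - f n a b q = (f n a b p - f n a b r) + (f n a b r - f n a b q))%R);
    [exact: Rabs_triang | ring].
Qed.

(* Only the finitely many indices below [N] matter up to [delta / 2]; the tail weighs less. *)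
Lemma sup_metric_ball_nbhd q delta : (0 < delta)%R ->
  exists O, tau O /\ O q /\ forall z, O z -> (sup_metric q z < delta)%R.
Proof.
move=> d0.
have [N HN] := pow_lt_1_zero (/ 2) (ltac:(rewrite Rabs_right; lra)) (delta / 2) (ltac:(lra)).
have hN : (/ 2 ^ N < delta / 2)%R.
  have := HN N (le_n N); rewrite pow_inv Rabs_right //.
  by apply/Rle_ge/Rlt_le/Rinv_0_lt_compat/pow_lt; lra.
pose close z n a b := (Rabs (f n a b z - f n a b q) < delta / 2)%R.
have [O [oO [Oq HO]]] : exists O, tau O /\ O q /\
    forall n, n < N -> forall z, O z -> forall a, a < N -> forall b, b < N -> close z n a b.
  apply: (finite_intersection_nbhd htop) => n _.
  have [O [oO [Oq HO]]] : exists O, tau O /\ O q /\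
      forall a, a < N -> forall z, O z -> forall b, b < N -> close z n a b.
    apply: (finite_intersection_nbhd htop) => a _.
    have [O [oO [Oq HO]]] : exists O, tau O /\ O q /\
        forall b, b < N -> forall z, O z -> close z n a b.
      by apply: (finite_intersection_nbhd htop) => b _; apply: f_continuous; lra.
    by exists O; split=> //; split=> // z Oz b bN; apply: HO.
  by exists O; split=> //; split=> // z Oz a aN b bN; apply: HO.
exists O; split=> //; split=> // z Oz.
apply: (Rle_lt_trans _ (delta / 2)); last lra.
apply: sup_metric_le => n a b; rewrite /weighted_gap Rabs_minus_sym.
have hw0 := weight_gt0 n a b; have hw1 := weight_le1 n a b.
have hab := Rabs_pos (f n a b z - f n a b q); have hb1 := gap_le1 n a b z q.
case: (boolP [&& n < N, a < N & b < N]) => [/and3P [hn ha hb]|hnot].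
- have := HO n hn z Oz a ha b hb; rewrite /close; nra.
- have : (weight n a b <= / 2 ^ N)%R.
    by apply: weight_le; move: hnot; rewrite !negb_and -!leqNgt; lia.
  nra.
Qed.

(* The complement of an open set is compact and covered by finitely many small neighbourhoods. *)
Lemma open_sup_metric_open V : tau V -> metric_open sup_metric V.
Proof.
have hm := sup_metric_is_metric.
move=> hV p Vp.
have hS : compact_in tau (fun x => ~ V x).
  apply: (compact_in_ext (compact_in_closed (Cl := fun x => ~ V x) (compact_spaceE.1 hcpt) _)).
    exact: tclosed_compl.
  by move=> x; split=> [[]|].
have pr r : ~ V r -> (0 < sup_metric p r)%R by move=> nVr; apply: (metric_gt0 hm) => e; subst.
pose G W := exists r, ~ V r /\ tau W /\ W r /\
  forall z, W z -> (sup_metric r z < sup_metric p r / 2)%R.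
have [|r nVr|n [g [hg hgc]]] := hS G.
- by move=> W [r [_ [h _]]].
- have := pr r nVr => pr0.
  have [O [oO [Or HO]]] := sup_metric_ball_nbhd r (sup_metric p r / 2) (ltac:(lra)).
  by exists O; split=> //; exists r.
pose P k (dd : R) := forall z, g k z -> (dd <= sup_metric p z)%R.
have [|k kn|dd [d0 Hd]] := finite_min_radius n P.
- by move=> k r r' _ le h z gz; have := h z gz; lra.
- have [r [nVr [_ [_ Hr]]]] := hg k kn; have := pr r nVr.
  exists (sup_metric p r / 2)%R; split; first lra.
  move=> z gz; have := Hr z gz.
  have := metric_triangle hm p z r; have := metric_sym hm z r; lra.
- exists dd; split=> // z dz; apply: NNPP => nVz.
  have [k [kn gz]] := hgc z nVz; have := Hd k kn z gz; lra.
Qed.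

Lemma sup_metric_open_open V : metric_open sup_metric V -> tau V.
Proof.
move=> hV; rewrite (set_ext V (fun x => exists A, (tau A /\ included A V) /\ A x)).
  by case: htop => _ [_ hU]; apply: hU => A [].
move=> x; split.
- move=> Vx; have [e [e0 He]] := hV x Vx.
  have [O [oO [Ox HO]]] := sup_metric_ball_nbhd x e e0.
  by exists O; split=> //; split=> // z Oz; apply: He; exact: HO.
- by move=> [A [[_ sA] Ax]]; apply: sA.
Qed.

Theorem compact_metrizable : metrizable tau.
Proof.
exists sup_metric; split; first exact: sup_metric_is_metric.
by move=> V; split; [exact: open_sup_metric_open | exact: sup_metric_open_open].
Qed.

End CompactMetrization.

Lemma metrizable_subspace {T} {op : topology T} (S S' : T -> Prop) :
  (forall x, S x -> S' x) -> metrizable (subspace op S') -> metrizable (subspace op S).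
Proof.
move=> SS' [d [hd hop]].
pose iota (x : {p | S p}) : {p | S' p} := exist _ (proj1_sig x) (SS' _ (proj2_sig x)).
exists (fun x y => d (iota x) (iota y)); split.
- split; [|split; [|split]].
  + move=> x y; exact: (metric_ge0 hd (iota x) (iota y)).
  + move=> x y; split; last by move=> ->; rewrite (metric_xx hd).
    by case: hd => _ [h _] /h e; apply: sig_eq; exact: (f_equal (@proj1_sig _ _) e).
  + move=> x y; exact: (metric_sym hd (iota x) (iota y)).
  + move=> x y z; exact: (metric_triangle hd (iota x) (iota y) (iota z)).
- move=> V; split.
  + move=> [W0 [oW0 HW0]] x Vx.
    have oU : subspace op S' (fun y => W0 (proj1_sig y)) by exists W0.
    have [e [e0 He]] := (hop _).1 oU (iota x) ((HW0 x).1 Vx).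
    by exists e; split=> // x' hx'; apply/(HW0 x'); exact: (He _ hx').
  + move=> hV.
    pose U y := exists x, V x /\ exists e, (0 < e)%R /\
       (forall x', (d (iota x) (iota x') < e)%R -> V x') /\ (d (iota x) y < e)%R.
    have [W0 [oW0 HW0]] : subspace op S' U.
      apply/hop => y [x [Vx [e [e0 [He dy]]]]].
      exists (e - d (iota x) y)%R; split; first lra.
      move=> y' hy'; exists x; split=> //; exists e; split=> //; split=> //.
      have := metric_triangle hd (iota x) y y'; lra.
    exists W0; split=> // x; split.
    * move=> Vx; apply/(HW0 (iota x)).
      have [e [e0 He]] := hV x Vx.
      by exists x; split=> //; exists e; split=> //; split=> //; rewrite (metric_xx hd).
    * by move=> /(HW0 (iota x)) [x0 [Vx0 [e [e0 [He dx]]]]]; exact: He.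
Qed.

Section Atlas.
Context {X : Type} {opX : topology X} {K : atlas X}.
Hypothesis hK : tame_top_atlas opX K.

Implicit Types I J L H : {set 'I_(aN K)}.
Local Notation U := (aUIJ K).
Local Notation ph := (aphi K).
Local Notation Ph := (aPhi K).
Local Notation E := (aE K).

Lemma atlas_chart {I} : inIK K I -> is_chart opX (aK K I).
Proof. by case: hK => [[_ [h _]] _]; apply: h. Qed.

Lemma atlas_foot {J} : inIK K J ->
  forall x, foot (aK K J) x <-> (forall i, i \in J -> foot (aK K [set i]) x).
Proof. by case: hK => [[_ [_ [h _]]] _]; apply: h. Qed.

Lemma atlas_coord_change {I J} : inIK K I -> inIK K J -> I \proper J ->
  coord_change (U I J) (Ph I J) (ph I J).
Proof. by case: hK => [[_ [_ [_ [h _]]]] _]; apply: h. Qed.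

Lemma U_refl {I} : inIK K I -> forall x, U I I x.
Proof. by case: hK => [[_ [_ [_ [_ [h _]]]]] _] hI x; case: (h I hI x). Qed.

Lemma phi_refl {I} : inIK K I -> forall x, ph I I x = x.
Proof. by case: hK => [[_ [_ [_ [_ [h _]]]]] _] hI x; case: (h I hI x). Qed.

Lemma cocycle_Phi {I J L} : inIK K I -> inIK K J -> inIK K L -> I \proper J -> J \proper L ->
  forall e, (U I J (pr _ e) /\ U J L (ph I J (pr _ e))) /\ U I L (pr _ e) ->
    Ph J L (Ph I J e) = Ph I L e.
Proof.
case: hK => [[_ [_ [_ [_ [_ h]]]]] _] hI hJ hL p1 p2.
by case: (h I J L hI hJ hL p1 p2).
Qed.

Lemma cocycle_U {I J L} : inIK K I -> inIK K J -> inIK K L -> I \proper J -> J \proper L ->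
  forall x, U I J x /\ U J L (ph I J x) -> U I L x.
Proof.
case: hK => [[_ [_ [_ [_ [_ h]]]]] _] hI hJ hL p1 p2.
by case: (h I J L hI hJ hL p1 p2).
Qed.

Lemma filtration_closed {I J} : inIK K J -> I \subset J -> tclosed (topE (aK K J)) (E I J).
Proof. by case: hK => [_ [[h _] _]]; apply: h. Qed.

Lemma filtration_full {J} : inIK K J -> forall e, E J J e.
Proof. by case: hK => [_ [[_ [h _]] _]] hJ; case: (h J hJ). Qed.

Lemma filtration_empty {J} : inIK K J -> forall e, E set0 J e <-> exists x, e = zero (aK K J) x.
Proof. by case: hK => [_ [[_ [h _]] _]] hJ; case: (h J hJ). Qed.

Lemma filtration_Phi {I J L} : inIK K J -> inIK K L -> I \subset J -> J \proper L ->
  forall e' : cE (aK K L),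
    (exists e, U J L (pr _ e) /\ E I J e /\ Ph J L e = e') <->
    (E I L e' /\ exists y, U J L y /\ ph J L y = pr _ e').
Proof. by case: hK => [_ [[_ [_ [h _]]] _]]; apply: h. Qed.

Lemma filtration_meet {I H J} : inIK K J -> I \subset J -> H \subset J ->
  forall e, (E I J e /\ E H J e) <-> E (I :&: H) J e.
Proof. by case: hK => [_ [[_ [_ [_ [h _]]]] _]]; apply: h. Qed.

Lemma filtration_im_phi {I J} : inIK K I -> inIK K J -> I \proper J ->
  forall x, U I J x -> E I J (sec _ (ph I J x)).
Proof. by case: hK => [_ [[_ [_ [_ [_ h]]]] _]] hI hJ p; case: (h I J hI hJ p). Qed.

Lemma tame_U_union {I J L} : inIK K I -> inIK K J -> inIK K L -> I \subset J -> I \subset L ->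
  forall x, (U I J x /\ U I L x) <-> (inIK K (J :|: L) /\ U I (J :|: L) x).
Proof. by case: hK => [_ [_ [h _]]]; apply: h. Qed.

Lemma tame_im_phi {I J L} : inIK K I -> inIK K J -> inIK K L -> I \subset J -> J \subset L ->
  forall y, (exists x, U I J x /\ U I L x /\ ph I J x = y) <-> (U J L y /\ E I J (sec _ y)).
Proof. by case: hK => [_ [_ [_ h]]]; apply: h. Qed.

Section Chart.
Context {I : {set 'I_(aN K)}} (hI : inIK K I).
Let hc := atlas_chart hI.

Lemma chartU_metrizable : metrizable (topU (aK K I)).
Proof. by move: hc; do 4! case=> _; case. Qed.
Lemma chartE_metrizable : metrizable (topE (aK K I)).
Proof. by move: hc; do 7! case=> _; case. Qed.
Lemma zero_continuous : continuous (topU (aK K I)) (topE (aK K I)) (zero (aK K I)).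
Proof. by move: hc; do 9! case=> _; case. Qed.
Lemma sec_continuous : continuous (topU (aK K I)) (topE (aK K I)) (sec (aK K I)).
Proof. by move: hc; do 10! case=> _; case. Qed.
Lemma pr_zero x : pr (aK K I) (zero (aK K I) x) = x.
Proof. by move: hc; do 11! case=> _; case=> h _; apply: h. Qed.
Lemma pr_sec x : pr (aK K I) (sec (aK K I) x) = x.
Proof. by move: hc; do 12! case=> _; case=> h _; apply: h. Qed.
Lemma psi_embedding : embedding (subspace (topU (aK K I)) (zero_set (aK K I))) opX (psi (aK K I)).
Proof. by move: hc; do 14! case=> _; case. Qed.
Lemma foot_psi y : foot (aK K I) y <-> exists z, psi (aK K I) z = y.
Proof. by move: hc; do 15! case=> _. Qed.

End Chart.

Section CoordChange.
Context {I J : {set 'I_(aN K)}} (hI : inIK K I) (hJ : inIK K J) (hIJ : I \proper J).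
Let cc := atlas_coord_change hI hJ hIJ.

Lemma U_zero_set x (h : sec (aK K I) x = zero (aK K I) x) :
  U I J x <-> (foot (aK K I) (psi (aK K I) (exist _ x h)) /\
               foot (aK K J) (psi (aK K I) (exist _ x h))).
Proof. by case: cc => _ [H _]; apply: H. Qed.

Lemma Phi_inj e e' : U I J (pr _ e) -> U I J (pr _ e') -> Ph I J e = Ph I J e' -> e = e'.
Proof.
by case: cc => _ [_ [[H _] _]] h h' /(H (exist _ e h) (exist _ e' h')) [].
Qed.

Lemma phi_embedding :
  embedding (subspace (topU (aK K I)) (U I J)) (topU (aK K J)) (fun x => ph I J (proj1_sig x)).
Proof. by case: cc => _ [_ [_ [H _]]]. Qed.

Lemma pr_Phi e : U I J (pr _ e) -> pr _ (Ph I J e) = ph I J (pr _ e).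
Proof. by case: cc => _ [_ [_ [_ [H _]]]]; apply: H. Qed.

Lemma zero_phi x : U I J x -> zero _ (ph I J x) = Ph I J (zero _ x).
Proof. by case: cc => _ [_ [_ [_ [_ [H _]]]]]; apply: H. Qed.

Lemma sec_phi x : U I J x -> sec _ (ph I J x) = Ph I J (sec _ x).
Proof. by case: cc => _ [_ [_ [_ [_ [_ [H _]]]]]]; apply: H. Qed.

Lemma psi_phi_proper x (h : sec (aK K I) x = zero (aK K I) x) : U I J x ->
  exists h' : sec (aK K J) (ph I J x) = zero (aK K J) (ph I J x),
    psi (aK K J) (exist _ (ph I J x) h') = psi (aK K I) (exist _ x h).
Proof. by case: cc => _ [_ [_ [_ [_ [_ [_ H]]]]]]; apply: H. Qed.

End CoordChange.

Lemma inIK_sub {I J} : inIK K J -> I \subset J -> I != set0 -> inIK K I.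
Proof. move=> [_ [x hx]] sIJ n0; split=> //; exists x => i iI; apply: hx; exact: (subsetP sIJ). Qed.

Section Inclusion.
Context {I J : {set 'I_(aN K)}} (hI : inIK K I) (hJ : inIK K J) (sIJ : I \subset J).

Lemma phi_inj {x x'} : U I J x -> U I J x' -> ph I J x = ph I J x' -> x = x'.
Proof.
case: (eqVproper sIJ) => [eIJ|p]; first by subst J; rewrite !phi_refl.
have [hinj _] := phi_embedding hI hJ p.
by move=> h h' /(hinj (exist _ x h) (exist _ x' h')) [].
Qed.

Lemma filtration_sec_phi {x} : U I J x -> E I J (sec _ (ph I J x)).
Proof.
case: (eqVproper sIJ) => [eIJ|p]; first by subst J; move=> _; apply: filtration_full.
exact: filtration_im_phi.
Qed.

Lemma psi_phi {x} (hx : zero_set (aK K I) x) : U I J x ->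
  exists h' : zero_set (aK K J) (ph I J x),
    psi (aK K J) (exist _ (ph I J x) h') = psi (aK K I) (exist _ x hx).
Proof.
case: (eqVproper sIJ) => [eIJ|p]; last exact: psi_phi_proper.
by subst J; rewrite (phi_refl hI); exists hx.
Qed.

Lemma zero_set_phi {x} : U I J x -> zero_set (aK K J) (ph I J x) -> zero_set (aK K I) x.
Proof.
case: (eqVproper sIJ) => [eIJ|p]; first by subst J; rewrite (phi_refl hI).
rewrite /zero_set => u; rewrite (sec_phi hI hJ p _ u) (zero_phi hI hJ p _ u) => e.
by apply: (Phi_inj hI hJ p _ _ _ _ e); rewrite ?(pr_sec hI) ?(pr_zero hI).
Qed.

Lemma U_of_foot {x} (hx : zero_set (aK K I) x) :
  foot (aK K J) (psi (aK K I) (exist _ x hx)) -> U I J x.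
Proof.
case: (eqVproper sIJ) => [eIJ _|p fJ]; first by subst J; exact: U_refl.
by apply/(U_zero_set hI hJ p); split=> //; apply/(foot_psi hI); eexists.
Qed.

End Inclusion.

Lemma phi_comp {H I L} : inIK K H -> inIK K I -> inIK K L -> H \subset I -> I \subset L ->
  forall {v}, U H I v -> U I L (ph H I v) -> U H L v /\ ph H L v = ph I L (ph H I v).
Proof.
move=> hH hI hL sHI sIL v u1 u2.
case: (eqVproper sHI) => [eHI|pHI]; first by subst I; rewrite phi_refl in u2 *.
case: (eqVproper sIL) => [eIL|pIL]; first by subst L; rewrite phi_refl.
have pHL := proper_sub_trans pHI sIL.
have uHL : U H L v by apply: (cocycle_U hH hI hL pHI pIL); split.
split=> //.
set e := zero (aK K H) v.
have pe : pr _ e = v by rewrite /e pr_zero.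
have hPhHI : pr _ (Ph H I e) = ph H I v by rewrite pr_Phi // pe.
have E1 : Ph I L (Ph H I e) = Ph H L e.
  by apply: (cocycle_Phi hH hI hL pHI pIL); rewrite pe; split.
have -> : ph H L v = pr _ (Ph H L e) by rewrite pr_Phi ?pe.
by rewrite -E1 pr_Phi ?hPhHI.
Qed.

Lemma U_union {J A B} : inIK K J -> inIK K A -> inIK K B -> J \subset A -> J \subset B ->
  forall {y}, U J A y -> U J B y -> inIK K (A :|: B) /\ U J (A :|: B) y.
Proof. by move=> hJ hA hB sA sB y uA uB; apply: (tame_U_union hJ hA hB sA sB y).1. Qed.

Lemma U_phi {I J L} : inIK K I -> inIK K J -> inIK K L -> I \subset J -> J \subset L ->
  forall {x}, U I J x -> U I L x -> U J L (ph I J x).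
Proof.
move=> hI hJ hL sIJ sJL x u1 u2.
by have [] := (tame_im_phi hI hJ hL sIJ sJL (ph I J x)).1 (ex_intro _ x (conj u1 (conj u2 erefl))).
Qed.

Lemma phi_factor {S T L} : inIK K S -> inIK K T -> inIK K L -> S \subset T -> T \subset L ->
  forall {t v}, U T L t -> U S L v -> ph T L t = ph S L v -> U S T v /\ ph S T v = t.
Proof.
move=> hS hT hL sST sTL t v ut uv e.
case: (eqVproper sTL) => [eTL|pTL]; first by subst T; rewrite (phi_refl hL) in e; subst t.
case: (eqVproper sST) => [eST|pST].
  subst S; rewrite (phi_refl hS); split; first exact: U_refl.
  by apply: esym; apply: (phi_inj hS hL sTL ut uv e).
have hEt : E S T (sec _ t).
  have [|e0 [u0 [E0 Q]]] := (filtration_Phi hT hL sST pTL (Ph T L (sec _ t))).2.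
    split; first by rewrite -sec_phi // e; exact: filtration_im_phi (proper_sub_trans pST sTL) _ uv.
    by exists t; split=> //; rewrite pr_Phi ?pr_sec.
  by rewrite -(Phi_inj hT hL pTL e0 (sec _ t) u0 (ltac:(by rewrite pr_sec)) Q).
have [v' [u1 [u2 e1]]] := (tame_im_phi hS hT hL sST sTL t).2 (conj ut hEt).
have [_ e2] := phi_comp hS hT hL sST sTL u1 (ltac:(by rewrite e1)).
have vv : v' = v by apply: (phi_inj hS hL (subset_trans sST sTL) u2 uv); rewrite e2 e1 e.
by subst v'; split.
Qed.

Definition obj_index (a : Obj K) := proj1_sig (projT1 a).

Definition simU (a b : Obj K) : Prop :=
  let L := obj_index a :|: obj_index b in
  inIK K L /\ U (obj_index a) L (projT2 a) /\ U (obj_index b) L (projT2 b) /\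
  ph (obj_index a) L (projT2 a) = ph (obj_index b) L (projT2 b).

Lemma simU_refl a : simU a a.
Proof.
case: a => [[I hI] x]; rewrite /simU /= setUid; split=> //.
by split; [exact: U_refl | split; [exact: U_refl|]].
Qed.

Lemma simU_sym a b : simU a b -> simU b a.
Proof.
case: a => [[I hI] x]; case: b => [[J hJ] y]; rewrite /simU /= setUC.
by case=> [h [u1 [u2 e]]]; split=> //; split=> //; split.
Qed.

(* All three points meet in the chart of M = I ∪ J ∪ L; the image of [x] there lies in the
   filtration step of N = I ∪ L, and tameness lets both [x] and [z] descend to the chart of N. *)
Lemma simU_trans a b c : simU a b -> simU b c -> simU a c.
Proof.
case: a => [[I hI] x]; case: b => [[J hJ] y]; case: c => [[L hL] z]; rewrite /simU /=.
move=> [hA [uIA [uJA eIJ]]] [hB [uJB [uLB eJL]]].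
set A := I :|: J in hA uIA uJA eIJ; set B := J :|: L in hB uJB uLB eJL.
have sIA : I \subset A := subsetUl _ _. have sJA : J \subset A := subsetUr _ _.
have sJB : J \subset B := subsetUl _ _. have sLB : L \subset B := subsetUr _ _.
have [hM uJM] := U_union hJ hA hB sJA sJB uJA uJB.
set M := A :|: B in hM uJM.
have sAM : A \subset M := subsetUl _ _. have sBM : B \subset M := subsetUr _ _.
have [_ eJ] := phi_comp hJ hA hM sJA sAM uJA (U_phi hJ hA hM sJA sAM uJA uJM).
have [_ eJ'] := phi_comp hJ hB hM sJB sBM uJB (U_phi hJ hB hM sJB sBM uJB uJM).
have [uIM eI] := phi_comp hI hA hM sIA sAM uIA (ltac:(rewrite eIJ; exact: U_phi)).
have [uLM eL] := phi_comp hL hB hM sLB sBM uLB (ltac:(rewrite -eJL; exact: U_phi)).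
have eIL : ph I M x = ph L M z by rewrite eI eIJ -eJ eJ' eJL -eL.
have sIM := subset_trans sIA sAM; have sLM := subset_trans sLB sBM.
set N := I :|: L.
have sIN : I \subset N := subsetUl _ _. have sLN : L \subset N := subsetUr _ _.
have sNM : N \subset M by rewrite /N subUset sIM sLM.
have hN : inIK K N.
  by apply: (inIK_sub hM sNM); rewrite setU_eq0 negb_and; have [-> _] := hI.
have EN : E N M (sec _ (ph I M x)).
  have := filtration_sec_phi hI hM sIM uIM; rewrite -{1}(setIidPl sIN) => h.
  exact: ((filtration_meet hM sIM sNM _).2 h).2.
have [x' [ux' [_ ex']]] := (tame_im_phi hN hM hM sNM (subxx M) _).2 (conj (U_refl hM _) EN).
have [uIN eIN] := phi_factor hI hN hM sIN sNM ux' uIM ex'.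
have [uLN eLN] := phi_factor hL hN hM sLN sNM ux' uLM (ltac:(by rewrite ex' eIL)).
by split=> //; split=> //; split=> //; rewrite eIN eLN.
Qed.

Lemma simKE a b : simK K a b <-> simU a b.
Proof.
split.
- elim=> {a b} [a b|a|a b _|a b c _ h1 _ h2].
  + case: a => [[I hI] x]; case: b => [[J hJ] y]; rewrite /step /simU /=.
    move=> [sIJ [u e]]; rewrite (setUidPr sIJ); split=> //; split=> //.
    by split; [exact: U_refl | rewrite phi_refl].
  + exact: simU_refl.
  + exact: simU_sym.
  + exact: simU_trans h1 h2.
- case: a => [[I hI] x]; case: b => [[J hJ] y]; rewrite /simU /=.
  move=> [h [u1 [u2 e]]].
  pose c : Obj K := existT _ (exist _ (I :|: J) h) (ph I (I :|: J) x).
  apply: (rst_trans _ _ _ c); first by apply: rst_step; split; [exact: subsetUl| split].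
  by apply/rst_sym/rst_step; split; [exact: subsetUr | split=> //=; rewrite e].
Qed.

End Atlas.

Section Limits.
Context {X : Type} {opX : topology X} {K : atlas X}.
Hypotheses (hK : tame_top_atlas opX K) (hXmet : metrizable opX).

Implicit Types I J L H : {set 'I_(aN K)}.
Local Notation U := (aUIJ K).
Local Notation ph := (aphi K).
Local Notation E := (aE K).

Definition obj {I} (hI : inIK K I) (x : cU (aK K I)) : Obj K :=
  existT (fun I0 : IKtype K => cU (aK K (proj1_sig I0))) (exist _ I hI) x.

Section ChartLimits.
Context {I : {set 'I_(aN K)}} (hI : inIK K I).

Lemma zero_set_limit {xs x} : converges (topU (aK K I)) xs x ->
  (forall n, zero_set (aK K I) (xs n)) -> zero_set (aK K I) x.
Proof.
move=> cx hz; have [hm ho] := metric_ofP (chartE_metrizable hK hI).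
apply: (converges_unique hm ho (converges_continuous (sec_continuous hK hI) cx)).
rewrite (_ : (fun n => sec _ (xs n)) = (fun n => zero _ (xs n))).
  exact: (converges_continuous (zero_continuous hK hI) cx).
exact: functional_extensionality.
Qed.

Lemma psi_converges {xs x} (hx : forall n, zero_set (aK K I) (xs n)) (h : zero_set (aK K I) x) :
  converges (topU (aK K I)) xs x ->
  converges opX (fun n => psi (aK K I) (exist _ (xs n) (hx n))) (psi (aK K I) (exist _ x h)).
Proof.
have [_ [hcont _]] := psi_embedding hK hI.
by move=> cx; apply: (converges_continuous hcont); apply: converges_subspace.
Qed.

Lemma psi_inj {x x'} (h : zero_set (aK K I) x) (h' : zero_set (aK K I) x') :
  psi (aK K I) (exist _ x h) = psi (aK K I) (exist _ x' h') -> x = x'.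
Proof. by have [hi _] := psi_embedding hK hI => /hi [->]. Qed.

Lemma psi_irrelevant x (h h' : zero_set (aK K I) x) :
  psi (aK K I) (exist _ x h) = psi (aK K I) (exist _ x h').
Proof. by rewrite (proof_irrelevance _ h h'). Qed.

End ChartLimits.

Lemma filtration_limit {I J} (hJ : inIK K J) (sIJ : I \subset J) {ys y} :
  converges (topU (aK K J)) ys y -> (forall n, E I J (sec _ (ys n))) -> E I J (sec _ y).
Proof.
apply: (converges_closed (C := fun z => E I J (sec _ z))).
exact: (sec_continuous hK hJ _ (filtration_closed hK hJ sIJ)).
Qed.

Lemma converges_of_phi {H I} (hH : inIK K H) (hI : inIK K I) (sHI : H \subset I) {vs v} :
  (forall n, U H I (vs n)) -> U H I v ->
  converges (topU (aK K I)) (fun n => ph H I (vs n)) (ph H I v) ->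
  converges (topU (aK K H)) vs v.
Proof.
move=> un u c; case: (eqVproper sHI) => [eHI|p].
  subst I; rewrite (phi_refl hK hH) in c.
  by rewrite (_ : (fun n => ph H H (vs n)) = vs) in c;
    last by apply: functional_extensionality => n; rewrite (phi_refl hK hH).
exact: (converges_embedding (zs := fun n => exist _ (vs n) (un n)) (z := exist _ v u)
          (phi_embedding hK hH hI p) c).
Qed.

Section ClosedGraph.
Context {I J : {set 'I_(aN K)}} (hI : inIK K I) (hJ : inIK K J).
Local Notation L := (I :|: J).
Hypothesis hL : inIK K L.
Variables (xs : nat -> cU (aK K I)) (x : cU (aK K I)) (ys : nat -> cU (aK K J)) (y : cU (aK K J)).
Hypotheses (cx : converges (topU (aK K I)) xs x) (cy : converges (topU (aK K J)) ys y).
Hypotheses (uI : forall n, U I L (xs n)) (uJ : forall n, U J L (ys n)).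
Hypothesis eIJ : forall n, ph I L (xs n) = ph J L (ys n).

Let sIL : I \subset L := subsetUl _ _.
Let sJL : J \subset L := subsetUr _ _.

Lemma filtration_meet_phi n : E (I :&: J) L (sec _ (ph I L (xs n))).
Proof.
apply: (filtration_meet hK hL sIL sJL _).1; split.
  exact: (filtration_sec_phi hK hI hL sIL (uI n)).
by rewrite eIJ; exact: (filtration_sec_phi hK hJ hL sJL (uJ n)).
Qed.

(* With disjoint index sets the sequences lie in the zero sets, and [X] is Hausdorff. *)
Lemma limit_simU_disjoint : I :&: J = set0 -> simU (obj hI x) (obj hJ y).
Proof.
move=> H0.
have zL n : zero_set (aK K L) (ph I L (xs n)).
  have := filtration_meet_phi n; rewrite H0 => /(filtration_empty hK hL) [z ez].
  have e : ph I L (xs n) = z by rewrite -(pr_sec hK hL (ph I L (xs n))) ez (pr_zero hK hL).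
  by rewrite /zero_set ez e.
have zx n := zero_set_phi hK hI hL sIL (uI n) (zL n).
have zy n : zero_set (aK K J) (ys n) by apply: (zero_set_phi hK hJ hL sJL (uJ n)); rewrite -eIJ.
have zx0 := zero_set_limit hI cx zx; have zy0 := zero_set_limit hJ cy zy.
have eps n : psi (aK K I) (exist _ (xs n) (zx n)) = psi (aK K J) (exist _ (ys n) (zy n)).
  have [h1 <-] := psi_phi hK hI hL sIL (zx n) (uI n).
  have [h2 <-] := psi_phi hK hJ hL sJL (zy n) (uJ n).
  by move: h1 h2; rewrite eIJ => h1 h2; exact: psi_irrelevant.
have [hm ho] := metric_ofP hXmet.
have ez : psi (aK K I) (exist _ x zx0) = psi (aK K J) (exist _ y zy0).
  apply: (converges_unique hm ho _ (psi_converges hJ zy zy0 cy)).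
  rewrite -(functional_extensionality _ _ eps); exact: psi_converges.
have fL : foot (aK K L) (psi (aK K I) (exist _ x zx0)).
  apply/(atlas_foot hK hL) => i; rewrite in_setU; case/orP => Hi.
  - by apply: (atlas_foot hK hI _).1 i Hi; apply/(foot_psi hK hI); eexists.
  - by apply: (atlas_foot hK hJ _).1 i Hi; apply/(foot_psi hK hJ); rewrite ez; eexists.
have ux := U_of_foot hK hI hL sIL zx0 fL.
have uy : U J L y by apply: (U_of_foot hK hJ hL sJL zy0); rewrite -ez.
split=> //; split=> //; split=> //=.
have [h1 e1] := psi_phi hK hI hL sIL zx0 ux.
have [h2 e2] := psi_phi hK hJ hL sJL zy0 uy.
by apply: (psi_inj hL h1 h2); rewrite e1 e2.
Qed.

(* Otherwise both sequences come from a single sequence in the chart of [I ∩ J]. *)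
Lemma limit_simK_meet : I :&: J != set0 -> simK K (obj hI x) (obj hJ y).
Proof.
set H := I :&: J => Hn0.
have sHI : H \subset I := subsetIl _ _. have sHJ : H \subset J := subsetIr _ _.
have sHL := subset_trans sHI sIL.
have hH : inIK K H := inIK_sub hI sHI Hn0.
have vex n : exists v, U H L v /\ ph H L v = ph I L (xs n).
  have [v [u1 [_ e1]]] :=
    (tame_im_phi hK hH hL hL sHL (subxx L) _).2 (conj (U_refl hK hL _) (filtration_meet_phi n)).
  by exists v.
pose vs n := proj1_sig (constructive_indefinite_description _ (vex n)).
have [uv ev] : (forall n, U H L (vs n)) /\ (forall n, ph H L (vs n) = ph I L (xs n)).
  by split=> n; case: (proj2_sig (constructive_indefinite_description _ (vex n))).
have dI n := phi_factor hK hH hI hL sHI sIL (uI n) (uv n) (esym (ev n)).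
have dJ n := phi_factor hK hH hJ hL sHJ sJL (uJ n) (uv n) (ltac:(by rewrite ev eIJ)).
have EI : E H I (sec _ x).
  apply: (filtration_limit hI sHI cx) => n.
  by rewrite -(dI n).2; exact: (filtration_sec_phi hK hH hI sHI (dI n).1).
have EJ : E H J (sec _ y).
  apply: (filtration_limit hJ sHJ cy) => n.
  by rewrite -(dJ n).2; exact: (filtration_sec_phi hK hH hJ sHJ (dJ n).1).
have [v [uvI [_ evI]]] := (tame_im_phi hK hH hI hI sHI (subxx I) x).2 (conj (U_refl hK hI x) EI).
have [v' [uvJ [_ evJ]]] := (tame_im_phi hK hH hJ hJ sHJ (subxx J) y).2 (conj (U_refl hK hJ y) EJ).
have c1 : converges (topU (aK K H)) vs v.
  apply: (converges_of_phi hH hI sHI (fun n => (dI n).1) uvI).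
  rewrite evI (_ : (fun n => ph H I (vs n)) = xs) //.
  by apply: functional_extensionality => n; exact: (dI n).2.
have c2 : converges (topU (aK K H)) vs v'.
  apply: (converges_of_phi hH hJ sHJ (fun n => (dJ n).1) uvJ).
  rewrite evJ (_ : (fun n => ph H J (vs n)) = ys) //.
  by apply: functional_extensionality => n; exact: (dJ n).2.
have [hm ho] := metric_ofP (chartU_metrizable hK hH).
have vv := converges_unique hm ho c1 c2; subst v'.
apply: (rst_trans _ _ _ (obj hH v)).
- by apply/rst_sym/rst_step; split=> //; split.
- by apply: rst_step; split=> //; split.
Qed.

End ClosedGraph.

Theorem simK_closed {I J} (hI : inIK K I) (hJ : inIK K J) xs x ys y :
  converges (topU (aK K I)) xs x -> converges (topU (aK K J)) ys y ->
  (forall n, simK K (obj hI (xs n)) (obj hJ (ys n))) -> simK K (obj hI x) (obj hJ y).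
Proof.
move=> cx cy hsim.
have hR n := (simKE hK _ _).1 (hsim n).
have hL : inIK K (I :|: J) := (hR 0%N).1.
have uI n : U I (I :|: J) (xs n) := (hR n).2.1.
have uJ n : U J (I :|: J) (ys n) := (hR n).2.2.1.
have eIJ n : ph I (I :|: J) (xs n) = ph J (I :|: J) (ys n) := (hR n).2.2.2.
case: (eqVneq (I :&: J) set0) => [H0|Hn0].
- exact/(simKE hK)/(limit_simU_disjoint hI hJ hL xs x ys y cx cy uI uJ eIJ H0).
- exact: (limit_simK_meet hI hJ hL xs x ys y cx cy uI uJ eIJ Hn0).
Qed.

End Limits.

Lemma Rmin1_ge0 a : (0 <= a)%R -> (0 <= Rmin 1 a)%R.
Proof. by move=> *; unfold Rmin; repeat destruct Rle_dec; lra. Qed.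

Lemma Rmin1_le1 a : (Rmin 1 a <= 1)%R.
Proof. by unfold Rmin; repeat destruct Rle_dec; lra. Qed.

Lemma Rmin1_triangle a b c : (0 <= b)%R -> (0 <= c)%R -> (a <= b + c)%R ->
  (Rmin 1 a <= Rmin 1 b + Rmin 1 c)%R.
Proof. by move=> *; unfold Rmin; repeat destruct Rle_dec; lra. Qed.

Lemma Rmin1_lt a r : (r <= 1)%R -> (Rmin 1 a < r)%R -> (a < r)%R.
Proof. by move=> *; unfold Rmin in *; repeat destruct Rle_dec; lra. Qed.

Section ObjMetric.
Context {X : Type} {opX : topology X} {K : atlas X}.
Hypothesis hK : tame_top_atlas opX K.

Local Notation chart_space I := (cU (aK K (proj1_sig I))).

Definition chart_metric (I : IKtype K) := metric_of (topU (aK K (proj1_sig I))).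

Lemma chart_metricP I : is_metric (chart_metric I) /\
  forall V, topU (aK K (proj1_sig I)) V <-> metric_open (chart_metric I) V.
Proof. exact: metric_ofP (chartU_metrizable hK (proj2_sig I)). Qed.

(* The disjoint union of the charts, each with its metric truncated at 1, at mutual distance 1. *)
Definition obj_dist (a b : Obj K) : R :=
  match excluded_middle_informative (projT1 a = projT1 b) with
  | left e =>
    Rmin 1 (chart_metric (projT1 b) (eq_rect _ (fun I => chart_space I) (projT2 a) _ e) (projT2 b))
  | right _ => 1%R
  end.

Lemma obj_dist_same I (x y : chart_space I) :
  obj_dist (existT _ I x) (existT _ I y) = Rmin 1 (chart_metric I x y).
Proof.
rewrite /obj_dist /=; case: excluded_middle_informative => // e.
by rewrite (proof_irrelevance _ e erefl).
Qed.

Lemma obj_dist_diff {I J} {x : chart_space I} {y : chart_space J} :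
  I <> J -> obj_dist (existT _ I x) (existT _ J y) = 1%R.
Proof. by move=> ne; rewrite /obj_dist /=; case: excluded_middle_informative. Qed.

Lemma obj_dist_ge0 a b : (0 <= obj_dist a b)%R.
Proof.
case: a => I x; case: b => J y; case: (classic (I = J)) => [e|ne].
- by subst J; rewrite obj_dist_same; apply/Rmin1_ge0/(metric_ge0 (chart_metricP I).1).
- by rewrite obj_dist_diff //; lra.
Qed.

Lemma obj_dist_is_metric : is_metric obj_dist.
Proof.
split; [exact: obj_dist_ge0 | split; [|split]].
- case=> I x [J y]; split.
  + case: (classic (I = J)) => [e|ne]; last by rewrite obj_dist_diff //; lra.
    subst J; rewrite obj_dist_same; unfold Rmin; destruct Rle_dec; first lra.
    by case: (chart_metricP I).1 => _ [h _] /h ->.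
  + move=> e; have eIJ : I = J := f_equal (@projT1 _ _) e.
    subst J; rewrite -(Eqdep.EqdepTheory.inj_pair2 _ _ _ _ _ e).
    rewrite obj_dist_same (metric_xx (chart_metricP I).1); unfold Rmin; destruct Rle_dec; lra.
- case=> I x [J y]; case: (classic (I = J)) => [e|ne].
  + by subst J; rewrite !obj_dist_same (metric_sym (chart_metricP I).1).
  + by rewrite !obj_dist_diff // => e; apply: ne.
- case=> I x [J y] [L z].
  case: (classic (I = L)) => [eIL|nIL]; last first.
    rewrite (obj_dist_diff nIL); case: (classic (I = J)) => [eIJ|nIJ].
    + subst J; rewrite (obj_dist_diff nIL).
      by have := obj_dist_ge0 (existT _ I x) (existT _ I y); lra.
    + by rewrite (obj_dist_diff nIJ); have := obj_dist_ge0 (existT _ J y) (existT _ L z); lra.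
  subst L; rewrite obj_dist_same.
  case: (classic (I = J)) => [eIJ|nIJ]; last first.
    rewrite (obj_dist_diff nIJ); have := Rmin1_le1 (chart_metric I x z).
    by have := obj_dist_ge0 (existT _ J y) (existT _ I z); lra.
  subst J; rewrite !obj_dist_same; have hm := (chart_metricP I).1.
  by apply: Rmin1_triangle; [exact: metric_ge0 | exact: metric_ge0 | exact: metric_triangle].
Qed.

Lemma obj_dist_lt1 a b : (obj_dist a b < 1)%R -> projT1 a = projT1 b.
Proof.
case: a => I x; case: b => J y /=; case: (classic (I = J)) => // ne.
by rewrite obj_dist_diff //; lra.
Qed.

Lemma obj_dist_near (I : IKtype K) (x : chart_space I) (c : Obj K) r : (r <= 1)%R ->
  (obj_dist (existT _ I x) c < r)%R ->
  exists x' : chart_space I, c = existT _ I x' /\ (chart_metric I x x' < r)%R.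
Proof.
case: c => J y r1 hd.
have /= e := obj_dist_lt1 _ _ (Rlt_le_trans _ _ _ hd r1); subst J.
by exists y; split=> //; rewrite obj_dist_same in hd; exact: (Rmin1_lt _ _ r1 hd).
Qed.

Lemma topObj_metric V : topObj K V <-> metric_open obj_dist V.
Proof.
split.
- move=> hV [I x] Vx.
  have [e [e0 He]] := ((chart_metricP I).2 _).1 (hV I) x Vx.
  exists (Rmin e 1); split; first by apply: Rmin_glb_lt; lra.
  move=> c /obj_dist_near [|x' [-> hd]]; first exact: Rmin_r.
  by apply: He; have := Rmin_l e 1; lra.
- move=> hV I; apply/(chart_metricP I).2 => x Vx.
  have [e [e0 He]] := hV _ Vx.
  exists e; split=> // y hy; apply: He; rewrite obj_dist_same.
  by have := Rmin_r 1 (chart_metric I x y); lra.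
Qed.

Lemma topObj_topology : is_topology (topObj K).
Proof. by rewrite (topology_ext _ _ topObj_metric); exact: metric_open_topology. Qed.

End ObjMetric.

Section Virtual.
Context {X : Type} {opX : topology X} {K : atlas X}.
Hypotheses (hK : tame_top_atlas opX K) (hXmet : metrizable opX).

Local Notation d := (@obj_dist _ K).
Let hd := obj_dist_is_metric hK.
Let hop := topObj_metric hK.

Lemma piK_eq a b : piK K a = piK K b <-> simK K a b.
Proof. exact: (qproj_eq _ (clos_rst_is_equiv _ _)). Qed.

Lemma piset_piK S a : piset S (piK K a) <-> exists c, S c /\ simK K c a.
Proof. by split=> -[c [Sc /piK_eq e]]; exists c. Qed.

Lemma not_simK_locally c b : ~ simK K c b -> exists r, (0 < r)%R /\
   forall c' b', (d c c' < r)%R -> (d b b' < r)%R -> ~ simK K c' b'.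
Proof.
case: c => [[I hI] x]; case: b => [[J hJ] y] ncb; apply: NNPP => H.
have inv_gt0 n : (0 < / INR n.+1)%R by apply/Rinv_0_lt_compat/lt_0_INR/ltP.
have inv_le1 n : (/ INR n.+1 <= 1)%R.
  by rewrite -Rinv_1; apply: Rinv_le_contravar; [lra | apply: (le_INR 1); apply/leP].
have ex n : exists p : cU (aK K I) * cU (aK K J),
    (chart_metric (exist _ I hI) x p.1 < / INR n.+1)%R /\
    (chart_metric (exist _ J hJ) y p.2 < / INR n.+1)%R /\ simK K (obj hI p.1) (obj hJ p.2).
  apply: NNPP => nH; apply: H; exists (/ INR n.+1)%R; split=> // c' b' dc db hcb; apply: nH.
  have [x' [e1 d1]] := obj_dist_near _ x c' _ (inv_le1 n) dc.
  have [y' [e2 d2]] := obj_dist_near _ y b' _ (inv_le1 n) db.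
  by exists (x', y'); split=> //; split=> //; rewrite e1 e2 in hcb.
pose ps n := proj1_sig (constructive_indefinite_description _ (ex n)).
have hps n := proj2_sig (constructive_indefinite_description _ (ex n)).
have cx : converges (topU (aK K I)) (fun n => (ps n).1) x.
  have [_ ho] := chart_metricP hK (exist _ I hI); simpl in ho.
  by apply: (converges_ball ho) => n; exact: (hps n).1.
have cy : converges (topU (aK K J)) (fun n => (ps n).2) y.
  have [_ ho] := chart_metricP hK (exist _ J hJ); simpl in ho.
  by apply: (converges_ball ho) => n; exact: (hps n).2.1.
by apply: ncb; apply: (simK_closed hK hXmet hI hJ _ _ _ _ cx cy) => n; exact: (hps n).2.2.
Qed.

Theorem piset_compact_tclosed S : compact_in (topObj K) S -> tclosed (topVirt K) (piset S).
Proof.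
move=> hc; rewrite /tclosed /topVirt /quotient_top.
rewrite (set_ext (fun a => ~ piset S (qproj (simK K) a)) (fun b => ~ exists c, S c /\ simK K c b)).
  by apply: (saturation_compl_open hd hop (simK K) S hc) => c b _; exact: not_simK_locally.
by move=> a; rewrite -/(piK K a) piset_piK.
Qed.

Lemma normtop_bartop (A : Obj K -> Prop) W : normtop A W -> bartop A W.
Proof. by move=> [W0 [hW0 HW]]; exists (fun a => W0 (piK K a)); split. Qed.

Lemma piA_surj {C : Obj K -> Prop} (y : {p | piset C p}) : exists z, piA C z = y.
Proof. by case: y => p [c [Cc e]]; exists (exist _ c Cc); apply: sig_eq. Qed.

Lemma bartop_compact {C} : compact_in (topObj K) C -> compact_space (bartop C).
Proof.
move=> hc; apply/compact_spaceE.
have := compact_in_image (f := piA C) (compact_in_subspace hc) (fun W hW => hW).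
move/compact_in_ext; apply=> y; split=> // _.
by have [z e] := piA_surj y; exists z.
Qed.

(* An open set of [|C|] is the complement of the image of the compact set [C \ V]. *)
Lemma bartop_normtop {C} : compact_in (topObj K) C -> forall W, bartop C W <-> normtop C W.
Proof.
move=> hc W; split; last exact: normtop_bartop.
move=> [V [hV HV]].
pose S' a := C a /\ ~ V a.
have hS' : compact_in (topObj K) S' := compact_in_closed hc (tclosed_compl _ _ hV).
exists (fun p => ~ piset S' p); split; first exact: (piset_compact_tclosed _ hS').
move=> [p hp] /=; have [c [Cc e]] := hp.
have ey : piA C (exist _ c Cc) = exist _ p hp by apply: sig_eq.
split.
- move=> Wy [c' [[Cc' nV] e']]; apply: nV; apply/(HV (exist _ c' Cc')).
  by rewrite (_ : piA C (exist _ c' Cc') = exist _ p hp) //; apply: sig_eq.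
- move=> nS; rewrite -ey; apply/(HV (exist _ c Cc)) => /=.
  by apply: NNPP => nV; apply: nS; exists c.
Qed.

Lemma bartop_eq_normtop {C} : compact_in (topObj K) C -> bartop C = normtop C.
Proof. by move=> hc; apply/topology_ext/bartop_normtop. Qed.

Lemma closure_compact_in {A A'} : (forall a, A a -> A' a) -> relcomp_in (topObj K) A A' ->
  forall a, tclosure (topObj K) A a <->
    exists h : A' a, tclosure (subspace (topObj K) A') (fun y => A (proj1_sig y)) (exist _ a h).
Proof.
move=> AA' hrel; have hD := compact_in_nested hrel.
move=> a; split.
- move=> h; apply: (h _ (compact_tclosed hd hop _ hD)).
  by move=> x Ax; exists (AA' x Ax) => Cl _ HCl; exact: (HCl (exist _ x (AA' x Ax)) Ax).
- move=> [h hS] Cl hCl ACl; apply: (hS (fun z => Cl (proj1_sig z))); last by move=> z /ACl.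
  by exists (fun x => ~ Cl x); split=> // z.
Qed.

Lemma piset_tclosure {A} : compact_in (topObj K) (tclosure (topObj K) A) ->
  forall p, piset (tclosure (topObj K) A) p <-> tclosure (topVirt K) (piset A) p.
Proof.
move=> hcl p; split.
- move=> [a [ha <-]] Cl hCl ACl.
  apply: (ha (fun a => Cl (piK K a))); first exact: hCl.
  by move=> x Ax; apply: ACl; exists x.
- move=> h; apply: h; first exact: (piset_compact_tclosed _ hcl).
  move=> q [a [Aa <-]]; exists a; split=> //.
  by move=> Cl _ ACl; exact: (ACl a Aa).
Qed.

Lemma piset_relcomp_in A A' : (forall a, A a -> A' a) -> relcomp_in (topObj K) A A' ->
  (forall p, piset (tclosure (topObj K) A) p <-> tclosure (topVirt K) (piset A) p) /\
  relcomp_in (topVirt K) (piset A) (piset A').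
Proof.
move=> AA' hrel.
have clD := closure_compact_in AA' hrel.
have hD := compact_in_nested hrel.
have hcl : compact_in (topObj K) (tclosure (topObj K) A).
  by apply: (compact_in_ext hD) => b; exact: (iff_sym (clD b)).
have e3 := piset_tclosure hcl.
split=> //; apply/compact_inE.
have SV p : piset A p -> piset A' p by move=> [a [Aa e]]; exists a; split=> //; apply: AA'.
set D := fun a => exists h : A' a, _ in hD.
pose f (z : {a | D a}) : {p | piset A' p} :=
  exist _ (piK K (proj1_sig z))
    (ex_intro _ (proj1_sig z) (conj (let: ex_intro h _ := proj2_sig z in h) erefl)).
have hf : continuous (subspace (topObj K) D) (subspace (topVirt K) (piset A')) f.
  by move=> W [W0 [hW0 HW]]; exists (fun a => W0 (piK K a)); split=> // z; exact: HW.
move: (compact_in_image (compact_in_subspace hD) hf).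
move/compact_in_ext; apply=> y; rewrite (subspace_closure SV y); split.
- by move=> [[a hDa] [_ <-]] /=; apply/e3; exists a; split=> //; exact/clD.
- move/e3 => [a [ha ea]]; exists (exist _ a ((clD a).1 ha)); split=> //.
  by apply: sig_eq.
Qed.

End Virtual.

Section Metrizability.
Context {X : Type} {opX : topology X} {K : atlas X}.
Hypotheses (hK : tame_top_atlas opX K) (hXmet : metrizable opX).
Variable C : Obj K -> Prop.
Hypothesis hC : compact_in (topObj K) C.

Local Notation Y := {p : virt K | piset C p}.
Local Notation tau := (normtop C).
Local Notation d := (@obj_dist _ K).
Let hd := obj_dist_is_metric hK.
Let hop := topObj_metric hK.

Lemma normtop_topology : is_topology tau.
Proof. exact/subspace_topology/quotient_topology/(topObj_topology hK). Qed.

Lemma normtop_compact : compact_space tau.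
Proof. by rewrite -(bartop_eq_normtop hK hXmet hC); exact: (bartop_compact hC). Qed.

Lemma normtop_compl_piset S : compact_in (topObj K) S -> tau (fun y : Y => ~ piset S (proj1_sig y)).
Proof.
by move=> hS; exists (fun p => ~ piset S p); split=> //; exact: (piset_compact_tclosed hK hXmet _ hS).
Qed.

(* Normality is inherited from the metric space [Obj]: shrink there, then push forward. *)
Lemma normtop_normal : normal_space tau.
Proof.
move=> F G hF hG hFG.
have [V0 [oV0 HV0]] := (bartop_normtop hK hXmet hC _).2 hF.
have [V1 [oV1 HV1]] := (bartop_normtop hK hXmet hC _).2 hG.
pose Fo a := C a /\ ~ V0 a.
have hFo : compact_in (topObj K) Fo := compact_in_closed hC (tclosed_compl _ _ oV0).
have FoV1 a : Fo a -> V1 a.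
  move=> [Ca nV0]; apply/(HV1 (exist _ a Ca)); apply: hFG.
  by apply: NNPP => nF; apply: nV0; exact/(HV0 (exist _ a Ca)).
have [N [Ncl [oN [cNcl [FoN [NNcl NclV1]]]]]] := compact_in_open_shrink hd hop Fo V1 hFo oV1 FoV1.
pose S1 a := C a /\ ~ N a.
pose S2 a := C a /\ Ncl a.
have cS1 : compact_in (topObj K) S1 := compact_in_closed hC (tclosed_compl _ _ oN).
have cS2 : compact_in (topObj K) S2 := compact_in_closed hC cNcl.
exists (fun y : Y => ~ piset S1 (proj1_sig y)), (fun y : Y => piset S2 (proj1_sig y)).
split; first exact: normtop_compl_piset.
split; first exact: (normtop_compl_piset _ cS2).
split; [|split].
- move=> y Fy [a [[Ca nNa] ea]]; apply: nNa; apply: FoN; split=> // V0a.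
  have : ~ F (piA C (exist _ a Ca)) by apply/(HV0 (exist _ a Ca)).
  by apply; rewrite (_ : piA C (exist _ a Ca) = y) //; apply: sig_eq.
- move=> [p [a [Ca ea]]] /= nS1.
  exists a; split=> //; split=> //; apply: NNcl; apply: NNPP => nN; apply: nS1.
  by exists a.
- move=> [p [a [Ca ea]]] /= [b [[Cb Nclb] eb]].
  rewrite (_ : exist _ p _ = piA C (exist _ b Cb)); last exact: sig_eq.
  by apply/(HV1 (exist _ b Cb)); exact: NclV1.
Qed.

Let net_ex n := compact_in_net hd hop C _ hC (Rinv_0_lt_compat _ (lt_0_INR _ (Nat.lt_0_succ n))).

Definition net (n : nat) : nat -> option (Obj K) :=
  proj1_sig (constructive_indefinite_description _ (net_ex n)).

Lemma netP n : (forall k c, net n k = Some c -> C c) /\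
  forall c, C c -> exists k c', net n k = Some c' /\ (d c' c < / INR n.+1)%R.
Proof. exact: proj2_sig (constructive_indefinite_description _ (net_ex n)). Qed.

Definition net_ball n k x :=
  C x /\ if net n k is Some c then (d c x <= / INR n.+1)%R else False.

Lemma net_ball_compact n k : compact_in (topObj K) (net_ball n k).
Proof.
apply: (compact_in_closed hC); case: (net n k) => [c|]; first exact: (closed_ball hd hop).
by apply/hop => x _; exists 1%R; split=> [|y _ []]; lra.
Qed.

Definition urysohn_cond (F G : Y -> Prop) := tclosed tau F /\ tau G /\ included F G.

Definition separating_fun (n a b : nat) : Y -> R :=
  let F y := piset (net_ball n a) (proj1_sig y) in
  let G y := ~ piset (net_ball n b) (proj1_sig y) in
  if excluded_middle_informative (urysohn_cond F G) then urysohn_fun (tau := tau) F G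
  else fun _ => 0%R.

Lemma separating_fun_range n a b y : (0 <= separating_fun n a b y <= 1)%R.
Proof.
rewrite /separating_fun; case: excluded_middle_informative => h /=; last lra.
exact: urysohn_fun_range.
Qed.

Lemma separating_fun_continuous n a b y eps : (0 < eps)%R -> exists O, tau O /\ O y /\
  forall z, O z -> (Rabs (separating_fun n a b z - separating_fun n a b y) < eps)%R.
Proof.
rewrite /separating_fun; case: excluded_middle_informative => [[hF [hG hFG]]|_] e0 /=.
- exact: (urysohn_fun_continuous normtop_topology normtop_normal _ _ hF hG hFG).
- exists (fun _ => True); split; first by case: normtop_topology.
  by split=> // z _; rewrite Rminus_diag Rabs_R0.
Qed.

(* Distinct points of [||C||] are images of non-equivalent points of [C], which have
   non-equivalent neighbourhoods ([not_simK_locally]); net balls inside them do the job. *)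
Lemma separating_fun_separates p q : p <> q ->
  exists n a b, separating_fun n a b p <> separating_fun n a b q.
Proof.
case: p q => [pp [cp [Cp ep]]] [qq [cq [Cq eq]]] npq.
have ns : ~ simK K cp cq.
  by move=> s; apply: npq; apply: sig_eq => /=; rewrite -ep -eq; exact/piK_eq.
have [r [r0 Hr]] := not_simK_locally hK hXmet _ _ ns.
have [N [hN N0]] := archimed_cor1 (r / 2) (ltac:(lra)).
have hn : (/ INR N.+1 < r / 2)%R.
  apply: Rle_lt_trans hN; apply: Rinv_le_contravar; first by apply: lt_0_INR.
  by apply: le_INR; apply/leP; exact: leqnSn.
have [_ hnet] := netP N.
have [a [ca [ea da]]] := hnet cp Cp.
have [b [cb [eb db]]] := hnet cq Cq.
set F := fun y : Y => piset (net_ball N a) (proj1_sig y).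
set G := fun y : Y => ~ piset (net_ball N b) (proj1_sig y).
have cond : urysohn_cond F G.
  split; first exact: (normtop_compl_piset _ (net_ball_compact N a)).
  split; first exact: (normtop_compl_piset _ (net_ball_compact N b)).
  move=> y [a' [[Ca' da'] ea']] [b' [[Cb' db'] eb']].
  rewrite ea in da'; rewrite eb in db'.
  apply: (Hr a' b'); last by apply/piK_eq; rewrite ea' eb'.
  + by have := metric_triangle hd cp ca a'; have := metric_sym hd cp ca; lra.
  + by have := metric_triangle hd cq cb b'; have := metric_sym hd cq cb; lra.
exists N, a, b; rewrite /separating_fun -/F -/G.
case: excluded_middle_informative => //= _.
have [hF [hG hFG]] := cond.
rewrite (urysohn_fun_F0 normtop_normal F G hF hG hFG); last first.
  by exists cp; split=> //; split=> //; rewrite ea; lra.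
rewrite (urysohn_fun_G1 normtop_normal F G hF hG hFG); first lra.
by apply; exists cq; split=> //; split=> //; rewrite eb; lra.
Qed.

Theorem normtop_metrizable : metrizable tau.
Proof.
exact: (compact_metrizable normtop_topology normtop_compact separating_fun
          separating_fun_range separating_fun_continuous separating_fun_separates).
Qed.

End Metrizability.

Theorem mainTheorem8 (X : Type) (opX : topology X)
  (hXtop : is_topology opX) (hXcomp : compact_space opX) (hXmet : metrizable opX)
  (K : atlas X) (hK : tame_top_atlas opX K) :
  (* (i) *)
  (forall A : Obj K -> Prop, forall W, normtop A W -> bartop A W) /\
  (* (ii) *)
  (forall A : Obj K -> Prop, relcomp (topObj K) A ->
     compact_space (bartop (tclosure (topObj K) A)) /\
     compact_space (normtop (tclosure (topObj K) A)) /\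
     (forall W, bartop (tclosure (topObj K) A) W <->
                normtop (tclosure (topObj K) A) W)) /\
  (* (iii) *)
  (forall A A' : Obj K -> Prop, (forall a, A a -> A' a) ->
     relcomp_in (topObj K) A A' ->
     (forall p, piset (tclosure (topObj K) A) p <-> tclosure (topVirt K) (piset A) p) /\
     relcomp_in (topVirt K) (piset A) (piset A')) /\
  (* (iv) *)
  (forall A : Obj K -> Prop, relcomp (topObj K) A ->
     metrizable (normtop (tclosure (topObj K) A)) /\
     metrizable (bartop (tclosure (topObj K) A)) /\
     metrizable (normtop A)).
Proof.
split; first exact: normtop_bartop.
split.
  move=> A /compact_inE hC; rewrite -(bartop_eq_normtop hK hXmet hC).
  by have := bartop_compact hC.
split; first exact: (piset_relcomp_in hK hXmet).
move=> A /compact_inE hC; have hmet := normtop_metrizable hK hXmet _ hC.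
split=> //; split; first by rewrite (bartop_eq_normtop hK hXmet hC).
by apply: (metrizable_subspace _ _ _ hmet) => p [a [Aa <-]]; exists a; split=> // Cl _; apply.
Qed.
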